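(* Let $S$ be a closed densely defined symmetric operator in a separable Hilbert space with equal nonzero defect numbers. Then $S$ is a Phillips symmetric operator if and only if $\mathfrak N_\lambda\perp\mathfrak N_{-i}$ for every $\lambda\in\mathbb C_+$.
   Context: $\mathfrak N_\lambda=\ker(S^*-\lambda I)$ are the defect subspaces of $S$. A boundary triplet of $S^*$ is $(\mathcal H,\Gamma_-,\Gamma_+)$ with $\Gamma_\pm:\mathcal D(S^* )\to\mathcal H$ linear, $(S^*f,g)-(f,S^*g)=i[(\Gamma_+f,\Gamma_+g)-(\Gamma_-f,\Gamma_-g)]$, and $(\Gamma_-,\Gamma_+)$ surjective onto $\mathcal H\oplus\mathcal H$. For $\lambda\in\mathbb C_+$ the characteristic function $\Theta(\lambda)$ is the bounded operator in $\mathcal H$ with $\mathcal D(S)\dotplus\mathfrak N_\lambda=\{f\in\mathcal D(S^* ):\Theta(\lambda)\Gamma_+f=\Gamma_-f\}$. $S$ is a Phillips symmetric operator (PSO) if its characteristic function is constant on $\mathbb C_+$ (independent of the triplet). *)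

From Stdlib Require Import Reals List.
Open Scope R_scope.

Record C := mkC { Re : R; Im : R }.

Definition C0 : C := mkC 0 0.
Definition C1 : C := mkC 1 0.
Definition Ci : C := mkC 0 1.
Definition Cadd (a b : C) : C := mkC (Re a + Re b) (Im a + Im b).
Definition Copp (a : C) : C := mkC (- Re a) (- Im a).
Definition Csub (a b : C) : C := Cadd a (Copp b).
Definition Cmul (a b : C) : C :=
  mkC (Re a * Re b - Im a * Im b) (Re a * Im b + Im a * Re b).
Definition Cconj (a : C) : C := mkC (Re a) (- Im a).
Definition Cplus (l : C) : Prop := 0 < Im l.

(** * Complex pre-Hilbert and Hilbert spaces
    The inner product is linear in the first and antilinear in the second
    argument, matching the convention (S^* f, g) of the paper. *)
Record PreHilbert := {
  carrier :> Type;
  vzero : carrier;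
  vadd : carrier -> carrier -> carrier;
  vopp : carrier -> carrier;
  vscal : C -> carrier -> carrier;
  inner : carrier -> carrier -> C;
  vadd_assoc : forall x y z, vadd x (vadd y z) = vadd (vadd x y) z;
  vadd_comm : forall x y, vadd x y = vadd y x;
  vadd_0 : forall x, vadd x vzero = x;
  vadd_opp : forall x, vadd x (vopp x) = vzero;
  vscal_1 : forall x, vscal C1 x = x;
  vscal_assoc : forall a b x, vscal a (vscal b x) = vscal (Cmul a b) x;
  vscal_distr_v : forall a x y, vscal a (vadd x y) = vadd (vscal a x) (vscal a y);
  vscal_distr_c : forall a b x, vscal (Cadd a b) x = vadd (vscal a x) (vscal b x);
  inner_conj : forall x y, inner y x = Cconj (inner x y);
  inner_add_l : forall x y z, inner (vadd x y) z = Cadd (inner x z) (inner y z);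
  inner_scal_l : forall a x y, inner (vscal a x) y = Cmul a (inner x y);
  inner_pos : forall x, Im (inner x x) = 0 /\ 0 <= Re (inner x x);
  inner_def : forall x, inner x x = C0 -> x = vzero
}.

Arguments vzero {_}.
Arguments vadd {_} _ _.
Arguments vopp {_} _.
Arguments vscal {_} _ _.
Arguments inner {_} _ _.

Definition vsub {H : PreHilbert} (x y : H) : H := vadd x (vopp y).
Definition hnorm {H : PreHilbert} (x : H) : R := sqrt (Re (inner x x)).

Definition converges {H : PreHilbert} (u : nat -> H) (l : H) : Prop :=
  forall eps, 0 < eps -> exists N, forall n, (N <= n)%nat -> hnorm (vsub (u n) l) < eps.
Definition cauchy {H : PreHilbert} (u : nat -> H) : Prop :=
  forall eps, 0 < eps -> exists N, forall n m, (N <= n)%nat -> (N <= m)%nat ->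
    hnorm (vsub (u n) (u m)) < eps.

Record HilbertSpace := {
  pre :> PreHilbert;
  complete : forall u : nat -> pre, cauchy u -> exists l, converges u l
}.

Definition dense {H : PreHilbert} (A : H -> Prop) : Prop :=
  forall x eps, 0 < eps -> exists y, A y /\ hnorm (vsub x y) < eps.

Definition separable (H : HilbertSpace) : Prop :=
  exists d : nat -> H, dense (fun y => exists n, d n = y).

Definition subspace {H : PreHilbert} (D : H -> Prop) : Prop :=
  D vzero /\ (forall x y, D x -> D y -> D (vadd x y)) /\
  (forall a x, D x -> D (vscal a x)).

Definition is_operator {H : PreHilbert} (D : H -> Prop) (T : H -> H) : Prop :=
  subspace D /\
  (forall x y, D x -> D y -> T (vadd x y) = vadd (T x) (T y)) /\
  (forall a x, D x -> T (vscal a x) = vscal a (T x)).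

Definition densely_defined {H : PreHilbert} (D : H -> Prop) : Prop := dense D.

Definition symmetric_op {H : PreHilbert} (D : H -> Prop) (T : H -> H) : Prop :=
  forall f g, D f -> D g -> inner (T f) g = inner f (T g).

Definition closed_op {H : PreHilbert} (D : H -> Prop) (T : H -> H) : Prop :=
  forall (u : nat -> H) f g, (forall n, D (u n)) ->
    converges u f -> converges (fun n => T (u n)) g -> D f /\ T f = g.

Definition adj_graph {H : PreHilbert} (D : H -> Prop) (T : H -> H) (g h : H) : Prop :=
  forall f, D f -> inner (T f) g = inner f h.
Definition adj_dom {H : PreHilbert} (D : H -> Prop) (T : H -> H) (g : H) : Prop :=
  exists h, adj_graph D T g h.

Definition defect {H : PreHilbert} (D : H -> Prop) (T : H -> H) (l : C) (g : H) : Prop :=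
  adj_graph D T g (vscal l g).

(** * Dimension (cardinality of an orthonormal basis) *)
Definition lincomb {H : PreHilbert} (l : list (C * H)) : H :=
  fold_right (fun p acc => vadd (vscal (fst p) (snd p)) acc) vzero l.

Definition is_onb {H : PreHilbert} (M B : H -> Prop) : Prop :=
  (forall b, B b -> M b) /\
  (forall b, B b -> inner b b = C1) /\
  (forall b b', B b -> B b' -> b <> b' -> inner b b' = C0) /\
  (forall x, M x -> forall eps, 0 < eps ->
     exists l : list (C * H), (forall p, In p l -> B (snd p)) /\
       hnorm (vsub x (lincomb l)) < eps).

Definition same_dim {H : PreHilbert} (M1 M2 : H -> Prop) : Prop :=
  exists B1 B2, is_onb M1 B1 /\ is_onb M2 B2 /\
    exists (f : {x | B1 x} -> {y | B2 y}) (g : {y | B2 y} -> {x | B1 x}),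
      (forall x, g (f x) = x) /\ (forall y, f (g y) = y).

Definition equal_nonzero_defect {H : PreHilbert} (D : H -> Prop) (T : H -> H) : Prop :=
  same_dim (defect D T Ci) (defect D T (Copp Ci)) /\
  exists g, defect D T Ci g /\ g <> vzero.

Definition is_boundary_triplet {H : PreHilbert} (D : H -> Prop) (T : H -> H)
    (K : HilbertSpace) (Gm Gp : H -> K) : Prop :=
  (forall f g, adj_dom D T f -> adj_dom D T g ->
     Gm (vadd f g) = vadd (Gm f) (Gm g) /\ Gp (vadd f g) = vadd (Gp f) (Gp g)) /\
  (forall a f, adj_dom D T f ->
     Gm (vscal a f) = vscal a (Gm f) /\ Gp (vscal a f) = vscal a (Gp f)) /\
  (forall f f' g g', adj_graph D T f f' -> adj_graph D T g g' ->
     Csub (inner f' g) (inner f g') =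
     Cmul Ci (Csub (inner (Gp f) (Gp g)) (inner (Gm f) (Gm g)))) /\
  (forall a b : K, exists f, adj_dom D T f /\ Gm f = a /\ Gp f = b).

Definition bounded_op {K : PreHilbert} (A : K -> K) : Prop :=
  (forall x y, A (vadd x y) = vadd (A x) (A y)) /\
  (forall a x, A (vscal a x) = vscal a (A x)) /\
  exists M, forall x, hnorm (A x) <= M * hnorm x.

Definition is_char_fun {H : PreHilbert} (D : H -> Prop) (T : H -> H)
    (K : HilbertSpace) (Gm Gp : H -> K) (Theta : C -> K -> K) : Prop :=
  forall l, Cplus l ->
    bounded_op (Theta l) /\
    forall f, (exists u v, D u /\ defect D T l v /\ f = vadd u v) <->
              (adj_dom D T f /\ Theta l (Gp f) = Gm f).

Definition is_PSO {H : PreHilbert} (D : H -> Prop) (T : H -> H) : Prop :=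
  exists (K : HilbertSpace) (Gm Gp : H -> K) (Theta : C -> K -> K),
    is_boundary_triplet D T K Gm Gp /\ is_char_fun D T K Gm Gp Theta /\
    (forall l m, Cplus l -> Cplus m -> forall x, Theta l x = Theta m x).

(* The von Neumann formula D(S^* ) = D(S) + N_i + N_{-i} carries everything.
   If the characteristic function is constant, D(S) + N_l does not depend on l in C_+.
   Writing f in N_l as u + v with u in D(S), v in N_i, the value (S^* f, g) for g in N_{-i}
   is both l (f, g) and i (f, g), so N_l is orthogonal to N_{-i} for l <> i; for l = i one
   splits f along N_mu with mu = (1 + t) i and uses |Im mu| |u| <= |(S - mu) u| = t |f|.
   Conversely, if every N_l is orthogonal to N_{-i}, the N_{-i}-component of any vector of N_l
   vanishes.  Choosing a unitary V : N_{-i} -> N_i (the defect numbers agree), the maps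
   Gamma_+ f = (1 + i) f_+ and Gamma_- f = (1 + i) V f_- form a boundary triplet, and
   D(S) + N_l = { f : f_- = 0 } for every l in C_+: the inclusion from right to left holds
   because f |-> f_+ maps N_l onto N_i (its range is closed, being |f_+|^2 = Im l |f|^2, and a
   vector of N_i orthogonal to it lies in ran (S - conj l), where it must vanish).  Hence the
   characteristic function is identically 0. *)

From Stdlib Require Import Reals List Lra Lia.
From Stdlib Require Import Classical ClassicalEpsilon ProofIrrelevance.
(* imported after [Reals], which also defines a constant [C] *)
Open Scope R_scope.

Lemma C_ext (a b : C) : Re a = Re b -> Im a = Im b -> a = b.
Proof. destruct a, b; simpl; intros; subst; reflexivity. Qed.

Ltac C_ring := apply C_ext; simpl; try ring.

Definition RtoC (r : R) : C := mkC r 0.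

Lemma C_eq_components (a b : C) : a = b -> Re a = Re b /\ Im a = Im b.
Proof. intros ->; split; reflexivity. Qed.

Section PreHilbertAlgebra.
Context {H : PreHilbert}.
Implicit Types x y z : H.

Lemma vadd_0_l x : vadd vzero x = x.
Proof. rewrite vadd_comm; apply vadd_0. Qed.

Lemma vadd_idem_zero y : vadd y y = y -> y = vzero.
Proof.
  intro E. rewrite <- (vadd_opp H y). rewrite <- E at 2.
  rewrite <- vadd_assoc, vadd_opp, vadd_0. reflexivity.
Qed.

Lemma vscal_0_l x : vscal C0 x = vzero.
Proof. apply vadd_idem_zero. rewrite <- vscal_distr_c. f_equal. C_ring. Qed.

Lemma vscal_0_r a : vscal a (@vzero H) = vzero.
Proof. apply vadd_idem_zero. rewrite <- vscal_distr_v, vadd_0. reflexivity. Qed.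

Lemma vopp_unique x y : vadd x y = vzero -> y = vopp x.
Proof.
  intro E. rewrite <- (vadd_0 _ y), <- (vadd_opp _ x), vadd_assoc.
  rewrite (vadd_comm _ y x), E, vadd_0_l. reflexivity.
Qed.

Lemma vopp_eq_scal x : vopp x = vscal (Copp C1) x.
Proof.
  symmetry. apply vopp_unique. rewrite <- (vscal_1 _ x) at 1.
  rewrite <- vscal_distr_c. replace (Cadd C1 (Copp C1)) with C0 by C_ring.
  apply vscal_0_l.
Qed.

Lemma inner_add_r x y z : inner x (vadd y z) = Cadd (inner x y) (inner x z).
Proof.
  rewrite (inner_conj _ (vadd y z) x), inner_add_l, (inner_conj _ y x), (inner_conj _ z x).
  C_ring.
Qed.

Lemma inner_scal_r a x y : inner x (vscal a y) = Cmul (Cconj a) (inner x y).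
Proof. rewrite (inner_conj _ (vscal a y) x), inner_scal_l, (inner_conj _ y x). C_ring. Qed.

Lemma inner_0_l y : inner vzero y = C0.
Proof. rewrite <- (vscal_0_l y), inner_scal_l. C_ring. Qed.

Lemma inner_0_r y : inner y vzero = C0.
Proof. rewrite <- (vscal_0_l y), inner_scal_r. C_ring. Qed.

Lemma inner_self_Im x : Im (inner x x) = 0.
Proof. apply inner_pos. Qed.

Lemma inner_Re_sym x y : Re (inner y x) = Re (inner x y).
Proof. rewrite inner_conj. reflexivity. Qed.

Lemma inner_Im_sym x y : Im (inner y x) = - Im (inner x y).
Proof. rewrite inner_conj. reflexivity. Qed.

Lemma vec_eq_inner x y : (forall z, inner x z = inner y z) -> x = y.
Proof.
  intro E. assert (Z : vadd x (vopp y) = vzero).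
  { apply inner_def. rewrite inner_add_l, vopp_eq_scal, inner_scal_l, E. C_ring. }
  rewrite <- (vadd_0 _ x), <- (vadd_opp _ y), (vadd_comm _ y), vadd_assoc, Z, vadd_0_l.
  reflexivity.
Qed.

End PreHilbertAlgebra.

Ltac inner_expand := unfold vsub in *; repeat rewrite vopp_eq_scal in *;
  repeat (rewrite ?inner_add_l, ?inner_add_r, ?inner_scal_l, ?inner_scal_r,
                  ?inner_0_l, ?inner_0_r in *).

Ltac vec_ring := apply vec_eq_inner; intro; inner_expand; C_ring.

Section Norm.
Context {H : PreHilbert}.
Implicit Types x y z : H.

Definition nsq x := Re (inner x x).

Lemma nsq_nonneg x : 0 <= nsq x.
Proof. apply inner_pos. Qed.

Lemma nsq_eq0 x : nsq x = 0 -> x = vzero.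
Proof. intro E. apply inner_def. C_ring. exact E. apply inner_self_Im. Qed.

Lemma vsub_eq0 x y : vsub x y = vzero -> x = y.
Proof.
  intro E. replace x with (vadd (vsub x y) y) by vec_ring. rewrite E. apply vadd_0_l.
Qed.

Lemma vsub_0_r y : vsub y vzero = y.
Proof. vec_ring. Qed.

Lemma hnorm_nonneg x : 0 <= hnorm x.
Proof. apply sqrt_pos. Qed.

Lemma hnorm_sq x : hnorm x * hnorm x = nsq x.
Proof. apply sqrt_sqrt, nsq_nonneg. Qed.

Lemma nsq_add x y : nsq (vadd x y) = nsq x + nsq y + 2 * Re (inner x y).
Proof. unfold nsq. inner_expand. simpl. rewrite (inner_Re_sym x y). ring. Qed.

Lemma nsq_scal a x : nsq (vscal a x) = (Re a * Re a + Im a * Im a) * nsq x.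
Proof. unfold nsq. inner_expand. simpl. rewrite inner_self_Im. ring. Qed.

Lemma cauchy_schwarz x y :
  Re (inner x y) * Re (inner x y) + Im (inner x y) * Im (inner x y) <= nsq x * nsq y.
Proof.
  destruct (Req_dec (nsq y) 0) as [E|E].
  - apply nsq_eq0 in E. subst y. unfold nsq. rewrite !inner_0_r. simpl. lra.
  - assert (Hn : 0 < nsq y) by (pose proof (nsq_nonneg y); lra).
    set (r := Re (inner x y)). set (i := Im (inner x y)). set (n := nsq y).
    (* expand 0 <= |x - ((x,y)/|y|^2) y|^2 *)
    pose proof (nsq_nonneg (vadd x (vscal (Copp (mkC (r / n) (i / n))) y))) as P.
    rewrite nsq_add, nsq_scal, inner_scal_r in P. simpl in P. fold r i n in P.
    assert (P2 : 0 <= (nsq x - (r * r + i * i) / n) * n).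
    { apply Rmult_le_pos; [|unfold n; lra].
      replace (nsq x - (r * r + i * i) / n) with
        (nsq x + (- (r / n) * - (r / n) + - (i / n) * - (i / n)) * n +
         2 * (- (r / n) * r - - - (i / n) * i)) by (field; unfold n; lra).
      exact P. }
    replace ((nsq x - (r * r + i * i) / n) * n) with (nsq x * n - (r * r + i * i)) in P2
      by (field; unfold n; lra).
    lra.
Qed.

Lemma Rabs_le_of_sq (a b : R) : 0 <= b -> a * a <= b * b -> Rabs a <= b.
Proof.
  intros Hb Hab. destruct (Rle_dec (Rabs a) b); auto.
  assert (b * b < Rabs a * Rabs a) by (apply Rmult_le_0_lt_compat; lra).
  rewrite <- Rabs_mult, Rabs_right in H0 by (apply Rle_ge, Rle_0_sqr). lra.
Qed.

Lemma cauchy_schwarz_Re x y : Rabs (Re (inner x y)) <= hnorm x * hnorm y.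
Proof.
  apply Rabs_le_of_sq. apply Rmult_le_pos; apply hnorm_nonneg.
  replace (hnorm x * hnorm y * (hnorm x * hnorm y))
    with ((hnorm x * hnorm x) * (hnorm y * hnorm y)) by ring.
  rewrite !hnorm_sq. pose proof (cauchy_schwarz x y). nra.
Qed.

Lemma cauchy_schwarz_Im x y : Rabs (Im (inner x y)) <= hnorm x * hnorm y.
Proof.
  apply Rabs_le_of_sq. apply Rmult_le_pos; apply hnorm_nonneg.
  replace (hnorm x * hnorm y * (hnorm x * hnorm y))
    with ((hnorm x * hnorm x) * (hnorm y * hnorm y)) by ring.
  rewrite !hnorm_sq. pose proof (cauchy_schwarz x y). nra.
Qed.

Lemma hnorm_le_of_nsq x b : 0 <= b -> nsq x <= b * b -> hnorm x <= b.
Proof.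
  intros Hb E. pose proof (hnorm_nonneg x). pose proof (hnorm_sq x).
  rewrite <- (Rabs_right (hnorm x)) by lra. apply Rabs_le_of_sq; lra.
Qed.

Lemma hnorm_lt_of_nsq x b : 0 < b -> nsq x < b * b -> hnorm x < b.
Proof.
  intros Hb E. pose proof (hnorm_nonneg x). pose proof (hnorm_sq x).
  destruct (Rlt_dec (hnorm x) b); auto.
  assert (b * b <= hnorm x * hnorm x) by (apply Rmult_le_compat; lra). lra.
Qed.

Lemma hnorm_triangle x y : hnorm (vadd x y) <= hnorm x + hnorm y.
Proof.
  apply hnorm_le_of_nsq. pose proof (hnorm_nonneg x); pose proof (hnorm_nonneg y); lra.
  rewrite nsq_add. pose proof (cauchy_schwarz_Re x y). pose proof (Rle_abs (Re (inner x y))).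
  rewrite <- !hnorm_sq. nra.
Qed.

Lemma hnorm_scal a x : hnorm (vscal a x) = sqrt (Re a * Re a + Im a * Im a) * hnorm x.
Proof.
  unfold hnorm at 1. fold (nsq (vscal a x)). rewrite nsq_scal, sqrt_mult.
  reflexivity. nra. apply nsq_nonneg.
Qed.

Lemma hnorm_scal_R (r : R) x : hnorm (vscal (RtoC r) x) = Rabs r * hnorm x.
Proof.
  rewrite hnorm_scal. simpl. f_equal. replace (r * r + 0 * 0) with (r * r) by ring.
  apply sqrt_Rsqr_abs.
Qed.

Lemma hnorm_eq0 x : hnorm x = 0 -> x = vzero.
Proof. intro E. apply nsq_eq0. pose proof (hnorm_sq x) as Q. rewrite E in Q. lra. Qed.

Lemma hnorm_vzero : hnorm (@vzero H) = 0.
Proof. unfold hnorm. rewrite inner_0_l. simpl. apply sqrt_0. Qed.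

Lemma hnorm_small_eq0 x : (forall e, 0 < e -> hnorm x <= e) -> x = vzero.
Proof.
  intro E. apply hnorm_eq0. apply Rle_antisym; [|apply hnorm_nonneg].
  destruct (Rle_dec (hnorm x) 0); auto. specialize (E (hnorm x / 2)). lra.
Qed.

Lemma vsub_sym x y : hnorm (vsub x y) = hnorm (vsub y x).
Proof.
  replace (vsub x y) with (vscal (RtoC (-1)) (vsub y x)) by vec_ring.
  rewrite hnorm_scal_R, Rabs_left by lra. ring.
Qed.

Lemma vsub_triangle x y z : hnorm (vsub x z) <= hnorm (vsub x y) + hnorm (vsub y z).
Proof.
  replace (vsub x z) with (vadd (vsub x y) (vsub y z)) by vec_ring. apply hnorm_triangle.
Qed.

Lemma inner_Re_le x y e : hnorm x <= e -> Rabs (Re (inner x y)) <= e * hnorm y.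
Proof.
  intro. eapply Rle_trans. apply cauchy_schwarz_Re.
  apply Rmult_le_compat_r; auto. apply hnorm_nonneg.
Qed.

Lemma inner_Im_le x y e : hnorm x <= e -> Rabs (Im (inner x y)) <= e * hnorm y.
Proof.
  intro. eapply Rle_trans. apply cauchy_schwarz_Im.
  apply Rmult_le_compat_r; auto. apply hnorm_nonneg.
Qed.

Lemma parallelogram x y : nsq (vsub x y) + nsq (vadd x y) = 2 * nsq x + 2 * nsq y.
Proof.
  unfold nsq. inner_expand. simpl.
  rewrite (inner_Re_sym x y), (inner_Im_sym x y), !inner_self_Im. ring.
Qed.

End Norm.

Lemma Rle_0_of_le_eps (a : R) : (forall e, 0 < e -> a <= e) -> a <= 0.
Proof. intro E. destruct (Rle_dec a 0); auto. specialize (E (a / 2)). lra. Qed.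

Lemma C_eq_approx (a b : C) :
  (forall e, 0 < e -> Rabs (Re a - Re b) <= e /\ Rabs (Im a - Im b) <= e) -> a = b.
Proof.
  intro E. assert (Z : forall r, (forall e, 0 < e -> Rabs r <= e) -> r = 0).
  { intros r Er. pose proof (Rle_0_of_le_eps _ Er). pose proof (Rabs_pos r).
    destruct (Req_dec r 0); auto. pose proof (Rabs_pos_lt r). lra. }
  apply C_ext; [assert (Re a - Re b = 0) | assert (Im a - Im b = 0)]; try lra;
    apply Z; intros e He; apply E, He.
Qed.

Lemma inv_INR_S_pos n : 0 < / (INR n + 1).
Proof. apply Rinv_0_lt_compat. pose proof (pos_INR n). lra. Qed.

Lemma inv_INR_S_small (r : R) :
  0 < r -> exists N : nat, forall n, (N <= n)%nat -> / (INR n + 1) < r.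
Proof.
  intros Hr. destruct (archimed_cor1 r Hr) as [N [HN HN0]]. exists N. intros n Hn.
  apply le_INR in Hn. assert (0 < INR N) by (apply lt_0_INR; lia).
  apply Rle_lt_trans with (/ INR N); auto. apply Rinv_le_contravar; lra.
Qed.

Definition closed_set {H : PreHilbert} (M : H -> Prop) : Prop :=
  forall (u : nat -> H) l, (forall n, M (u n)) -> converges u l -> M l.

Section Convergence.
Context {H : PreHilbert}.
Implicit Types (u v : nat -> H) (a b w : H).

Lemma converges_ext u v a : (forall n, u n = v n) -> converges u a -> converges v a.
Proof. intros E Cu e He. destruct (Cu e He) as [N HN]. exists N. intros n Hn. rewrite <- E. auto. Qed.

Lemma converges_add u v a b : converges u a -> converges v b ->
  converges (fun n => vadd (u n) (v n)) (vadd a b).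
Proof.
  intros Cu Cv e He. destruct (Cu (e/2)) as [N1 HN1]; [lra|]. destruct (Cv (e/2)) as [N2 HN2]; [lra|].
  exists (max N1 N2). intros n Hn.
  replace (vsub (vadd (u n) (v n)) (vadd a b)) with (vadd (vsub (u n) a) (vsub (v n) b))
    by vec_ring.
  eapply Rle_lt_trans. apply hnorm_triangle.
  specialize (HN1 n ltac:(lia)). specialize (HN2 n ltac:(lia)). lra.
Qed.

Lemma converges_scal u a (c : C) : converges u a ->
  converges (fun n => vscal c (u n)) (vscal c a).
Proof.
  intros Cu e He. set (k := sqrt (Re c * Re c + Im c * Im c)).
  assert (Hk : 0 <= k) by apply sqrt_pos.
  destruct (Cu (e / (k + 1))) as [N HN]. apply Rdiv_lt_0_compat; lra.
  exists N. intros n Hn.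
  replace (vsub (vscal c (u n)) (vscal c a)) with (vscal c (vsub (u n) a)) by vec_ring.
  rewrite hnorm_scal. fold k. specialize (HN n Hn).
  pose proof (hnorm_nonneg (vsub (u n) a)).
  apply Rle_lt_trans with ((k + 1) * hnorm (vsub (u n) a)). nra.
  replace e with ((k + 1) * (e / (k + 1))) by (field; lra).
  apply Rmult_lt_compat_l; lra.
Qed.

Lemma converges_unique u a b : converges u a -> converges u b -> a = b.
Proof.
  intros Ca Cb. apply vsub_eq0, hnorm_small_eq0. intros e He.
  destruct (Ca (e/2)) as [N1 H1]; [lra|]. destruct (Cb (e/2)) as [N2 H2]; [lra|].
  pose proof (vsub_triangle a (u (max N1 N2)) b). rewrite (vsub_sym a (u _)) in H0.
  specialize (H1 (max N1 N2) ltac:(lia)). specialize (H2 (max N1 N2) ltac:(lia)). lra.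
Qed.

Lemma converges_cauchy u a : converges u a -> cauchy u.
Proof.
  intros Cu e He. destruct (Cu (e/2)) as [N HN]; [lra|]. exists N. intros n m Hn Hm.
  eapply Rle_lt_trans. apply (vsub_triangle _ a). rewrite (vsub_sym a).
  pose proof (HN n Hn). pose proof (HN m Hm). lra.
Qed.

Lemma converges_inner_const u a w (c : C) :
  converges u a -> (forall n, inner (u n) w = c) -> inner a w = c.
Proof.
  intros Cu E. apply C_eq_approx. intros e He.
  pose proof (hnorm_nonneg w).
  destruct (Cu (e / (hnorm w + 1))) as [N HN]. apply Rdiv_lt_0_compat; lra.
  specialize (HN N (le_n N)). rewrite vsub_sym in HN.
  assert (Ew : inner a w = Cadd (inner (vsub a (u N)) w) c)
    by (rewrite <- (E N); inner_expand; C_ring).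
  assert (B : e / (hnorm w + 1) * hnorm w <= e).
  { apply Rle_trans with (e / (hnorm w + 1) * (hnorm w + 1)); [|right; field; lra].
    apply Rmult_le_compat_l; [apply Rlt_le, Rdiv_lt_0_compat|]; lra. }
  rewrite Ew; simpl. replace (_ + Re c - Re c) with (Re (inner (vsub a (u N)) w)) by ring.
  replace (_ + Im c - Im c) with (Im (inner (vsub a (u N)) w)) by ring.
  split; eapply Rle_trans; try exact B.
  - apply inner_Re_le. lra.
  - apply inner_Im_le. lra.
Qed.

Lemma closed_orthogonal (P : H -> Prop) :
  closed_set (fun g => forall w, P w -> inner g w = C0).
Proof.
  intros u l Hu Cu w Pw. apply (converges_inner_const u l w C0 Cu). intro n. apply Hu, Pw.
Qed.

Lemma dense_orthogonal_zero (D : H -> Prop) z :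
  dense D -> (forall f, D f -> inner f z = C0) -> z = vzero.
Proof.
  intros Dd Orth. apply hnorm_small_eq0. intros e He.
  destruct (Dd z e He) as [y [Dy Hy]].
  assert (E : nsq z = Re (inner (vsub z y) z)).
  { unfold nsq. inner_expand. rewrite (Orth y Dy). simpl. ring. }
  pose proof (cauchy_schwarz_Re (vsub z y) z). pose proof (Rle_abs (Re (inner (vsub z y) z))).
  rewrite <- hnorm_sq in E. pose proof (hnorm_nonneg z).
  destruct (Req_dec (hnorm z) 0) as [Z|Z]; [lra|]. nra.
Qed.

Lemma subspace_vsub (M : H -> Prop) x y : subspace M -> M x -> M y -> M (vsub x y).
Proof.
  intros [M0 [Ma Ms]] Mx My. unfold vsub. rewrite vopp_eq_scal. apply Ma; auto.
Qed.

End Convergence.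

Section Projection.
Context {H : PreHilbert} (M : H -> Prop) (SM : subspace M).

Lemma distance_infimum x : exists d, 0 <= d /\
  (forall w, M w -> d <= hnorm (vsub x w)) /\
  (forall e, 0 < e -> exists w, M w /\ hnorm (vsub x w) < d + e).
Proof.
  set (E := fun r => exists w, M w /\ r = - hnorm (vsub x w)).
  assert (Eb : bound E).
  { exists 0. intros r [w [_ ->]]. pose proof (hnorm_nonneg (vsub x w)). lra. }
  assert (Ene : exists r, E r) by (exists (- hnorm (vsub x vzero)); exists vzero; split; [apply SM | auto]).
  destruct (completeness E Eb Ene) as [L [LU LL]].
  exists (- L). split; [|split].
  - assert (L <= 0); [|lra]. apply LL. intros r [w [_ ->]].
    pose proof (hnorm_nonneg (vsub x w)). lra.
  - intros w Mw. assert (- hnorm (vsub x w) <= L) by (apply LU; exists w; auto). lra.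
  - intros e He. apply NNPP. intro N. assert (L <= L - e); [|lra].
    apply LL. intros r [w [Mw ->]].
    destruct (Rlt_dec (hnorm (vsub x w)) (- L + e)); [exfalso; eauto | lra].
Qed.

Lemma minimizing_sequence_cauchy x d (ms : nat -> H) : 0 <= d ->
  (forall w, M w -> d <= hnorm (vsub x w)) -> (forall n, M (ms n)) ->
  (forall n, hnorm (vsub x (ms n)) < d + / (INR n + 1)) -> cauchy ms.
Proof.
  destruct SM as [_ [Ma Ms]]. intros Hd0 Hd Mms Hms e He.
  destruct (inv_INR_S_small (e * e / (8 * d + 4))) as [N HN]; [apply Rdiv_lt_0_compat; nra|].
  destruct (inv_INR_S_small 1 Rlt_0_1) as [N1 HN1].
  exists (max N N1). intros n k Hn Hk. rewrite vsub_sym.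
  apply hnorm_lt_of_nsq; auto.
  (* parallelogram law with the midpoint c in M:
     |ms k - ms n|^2 = 2|x - ms n|^2 + 2|x - ms k|^2 - 4|x - c|^2 <= (8 d + 4) max(a, b) *)
  pose proof (parallelogram (vsub x (ms n)) (vsub x (ms k))) as P.
  replace (vsub (vsub x (ms n)) (vsub x (ms k))) with (vsub (ms k) (ms n)) in P by vec_ring.
  set (c := vscal (RtoC (/2)) (vadd (ms n) (ms k))).
  assert (Mc : M c) by (apply Ms, Ma; auto).
  replace (vadd (vsub x (ms n)) (vsub x (ms k))) with (vscal (RtoC 2) (vsub x c)) in P
    by (unfold c; vec_ring; field).
  rewrite nsq_scal in P. simpl in P.
  assert (d * d <= nsq (vsub x c))
    by (rewrite <- hnorm_sq; pose proof (Hd c Mc); apply Rmult_le_compat; lra).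
  pose proof (Hms n). pose proof (Hms k). pose proof (Hd _ (Mms n)). pose proof (Hd _ (Mms k)).
  pose proof (HN n ltac:(lia)). pose proof (HN k ltac:(lia)).
  pose proof (HN1 n ltac:(lia)). pose proof (HN1 k ltac:(lia)).
  pose proof (inv_INR_S_pos n). pose proof (inv_INR_S_pos k).
  set (a := / (INR n + 1)) in *. set (b := / (INR k + 1)) in *.
  assert (nsq (vsub x (ms n)) <= (d + a) * (d + a))
    by (rewrite <- hnorm_sq; apply Rmult_le_compat; lra).
  assert (nsq (vsub x (ms k)) <= (d + b) * (d + b))
    by (rewrite <- hnorm_sq; apply Rmult_le_compat; lra).
  assert (a * (8 * d + 4) < e * e).
  { apply Rmult_lt_reg_r with (/ (8 * d + 4)). apply Rinv_0_lt_compat; lra.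
    replace (a * (8 * d + 4) * / (8 * d + 4)) with a by (field; lra). lra. }
  assert (b * (8 * d + 4) < e * e).
  { apply Rmult_lt_reg_r with (/ (8 * d + 4)). apply Rinv_0_lt_compat; lra.
    replace (b * (8 * d + 4) * / (8 * d + 4)) with b by (field; lra). lra. }
  assert (a * a <= a) by nra. assert (b * b <= b) by nra. nra.
Qed.

Lemma minimizer_orthogonal x m : M m ->
  (forall w, M w -> nsq (vsub x m) <= nsq (vsub x w)) ->
  forall m', M m' -> inner (vsub x m) m' = C0.
Proof.
  destruct SM as [_ [Ma Ms]]. intros Mm Hmin m' Mm'.
  set (n := nsq m'). pose proof (nsq_nonneg m') as Hn.
  set (t := / (n + 1)).
  assert (Ht : 0 < t) by (apply Rinv_0_lt_compat; unfold n; lra).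
  assert (Htn : t * n < 1).
  { unfold t. apply Rmult_lt_reg_l with (n + 1); [unfold n; lra|].
    replace ((n + 1) * (/ (n + 1) * n)) with n by (field; unfold n; lra). unfold n; lra. }
  set (a := vsub x m). set (z := inner a m').
  specialize (Hmin (vadd m (vscal (Cmul (RtoC t) z) m')) ltac:(apply Ma; auto)).
  replace (vsub x (vadd m (vscal (Cmul (RtoC t) z) m')))
    with (vsub a (vscal (Cmul (RtoC t) z) m')) in Hmin by (unfold a; vec_ring).
  fold a in Hmin. unfold nsq in Hmin. inner_expand. simpl in Hmin.
  rewrite (inner_Re_sym a m'), (inner_Im_sym a m'), (inner_self_Im m') in Hmin.
  change (Re (inner m' m')) with n in Hmin. fold z in Hmin.
  set (zr := Re z) in *. set (zi := Im z) in *.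
  assert (Hz : 0 <= zr * zr + zi * zi) by nra.
  assert (0 <= t * (zr * zr + zi * zi) * (t * n - 2)) by lra.
  assert (zr * zr + zi * zi = 0).
  { destruct (Req_dec (zr * zr + zi * zi) 0) as [|NZ]; auto.
    assert (0 < t * (zr * zr + zi * zi)) by (apply Rmult_lt_0_compat; lra). nra. }
  assert (zr = 0) by nra. assert (zi = 0) by nra. fold z. C_ring; assumption.
Qed.

End Projection.

Lemma projection_minimizer {H : HilbertSpace} (M : H -> Prop) x :
  subspace M -> closed_set M ->
  exists m, M m /\ forall w, M w -> nsq (vsub x m) <= nsq (vsub x w).
Proof.
  intros SM CM. destruct (distance_infimum M SM x) as [d [Hd0 [Hd1 Hd2]]].
  assert (Hch : forall n, {m | M m /\ hnorm (vsub x m) < d + / (INR n + 1)}).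
  { intro n. apply constructive_indefinite_description, Hd2, inv_INR_S_pos. }
  set (ms := fun n => proj1_sig (Hch n)).
  assert (Mms : forall n, M (ms n)) by (intro n; apply (proj2_sig (Hch n))).
  assert (Hms : forall n, hnorm (vsub x (ms n)) < d + / (INR n + 1))
    by (intro n; apply (proj2_sig (Hch n))).
  destruct (complete H ms (minimizing_sequence_cauchy M SM x d ms Hd0 Hd1 Mms Hms)) as [m Cm].
  assert (Hdm : hnorm (vsub x m) <= d).
  { assert (hnorm (vsub x m) - d <= 0); [|lra]. apply Rle_0_of_le_eps. intros e He.
    destruct (Cm (e/2)) as [N1 HN1]; [lra|]. destruct (inv_INR_S_small (e/2)) as [N2 HN2]; [lra|].
    pose proof (HN1 (max N1 N2) ltac:(lia)). pose proof (HN2 (max N1 N2) ltac:(lia)).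
    pose proof (Hms (max N1 N2)). pose proof (vsub_triangle x (ms (max N1 N2)) m). lra. }
  exists m. split; [apply (CM ms); auto|]. intros w Mw.
  rewrite <- !hnorm_sq. pose proof (Hd1 w Mw). pose proof (hnorm_nonneg (vsub x m)).
  apply Rmult_le_compat; lra.
Qed.

Theorem projection_theorem {H : HilbertSpace} (M : H -> Prop) x :
  subspace M -> closed_set M ->
  exists m, M m /\ forall m', M m' -> inner (vsub x m) m' = C0.
Proof.
  intros SM CM. destruct (projection_minimizer M x SM CM) as [m [Mm Hmin]].
  exists m. split; auto. apply minimizer_orthogonal; auto.
Qed.

Lemma sig_eq {A : Type} (P : A -> Prop) (a b : {x | P x}) : proj1_sig a = proj1_sig b -> a = b.
Proof. destruct a, b. simpl. intros ->. f_equal. apply proof_irrelevance. Qed.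

Section ClosedSubspace.
Context {H : HilbertSpace} (M : H -> Prop) (SM : subspace M) (CM : closed_set M).

Definition subspace_carrier := {x : H | M x}.

Lemma subspace_vopp x : M x -> M (vopp x).
Proof. intro. rewrite vopp_eq_scal. apply SM; auto. Qed.

Definition subspace_prehilbert : PreHilbert.
Proof.
  refine (@Build_PreHilbert subspace_carrier
    (exist _ vzero (proj1 SM))
    (fun a b => exist _ (vadd (proj1_sig a) (proj1_sig b))
                  (proj1 (proj2 SM) _ _ (proj2_sig a) (proj2_sig b)))
    (fun a => exist _ (vopp (proj1_sig a)) (subspace_vopp _ (proj2_sig a)))
    (fun c a => exist _ (vscal c (proj1_sig a)) (proj2 (proj2 SM) c _ (proj2_sig a)))
    (fun a b => inner (proj1_sig a) (proj1_sig b)) _ _ _ _ _ _ _ _ _ _ _ _ _);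
  intros; try apply sig_eq; simpl.
  - apply vadd_assoc.
  - apply vadd_comm.
  - apply vadd_0.
  - apply vadd_opp.
  - apply vscal_1.
  - apply vscal_assoc.
  - apply vscal_distr_v.
  - apply vscal_distr_c.
  - apply inner_conj.
  - apply inner_add_l.
  - apply inner_scal_l.
  - apply inner_pos.
  - apply inner_def; assumption.
Defined.

Definition subspace_hilbert : HilbertSpace.
Proof.
  refine (@Build_HilbertSpace subspace_prehilbert _).
  intros u Cu.
  destruct (complete H (fun n => proj1_sig (u n)) Cu) as [l Cl].
  assert (Ml : M l) by (apply (CM (fun n => proj1_sig (u n)) l); auto; intro n; apply (proj2_sig (u n))).
  exists (exist _ l Ml). exact Cl.
Defined.

End ClosedSubspace.

Section LinearCombinations.
Context {H : PreHilbert}.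
Implicit Types (l : list (C * H)) (B : H -> Prop).

Definition lscale (c : C) l := map (fun p => (Cmul c (fst p), snd p)) l.
Definition lmap (F : H -> H) l := map (fun p => (fst p, F (snd p))) l.
Definition supported_in B l := forall p, In p l -> B (snd p).

Lemma lincomb_app l l' : lincomb (l ++ l') = vadd (lincomb l) (lincomb l').
Proof.
  induction l as [|p l IH]; simpl. rewrite vadd_0_l; auto.
  rewrite IH. vec_ring.
Qed.

Lemma lincomb_lscale c l : lincomb (lscale c l) = vscal c (lincomb l).
Proof.
  induction l as [|p l IH]; simpl. rewrite vscal_0_r; auto.
  rewrite IH. vec_ring.
Qed.

Lemma lincomb_vsub l l' : vsub (lincomb l) (lincomb l') = lincomb (l ++ lscale (Copp C1) l').
Proof. rewrite lincomb_app, lincomb_lscale. unfold vsub. rewrite vopp_eq_scal. reflexivity. Qed.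

Lemma lmap_app F l l' : lmap F (l ++ l') = lmap F l ++ lmap F l'.
Proof. apply map_app. Qed.

Lemma lmap_lscale F c l : lmap F (lscale c l) = lscale c (lmap F l).
Proof. unfold lmap, lscale. rewrite !map_map. reflexivity. Qed.

Lemma lmap_lmap_id (F G : H -> H) B l :
  (forall b, B b -> G (F b) = b) -> supported_in B l -> lmap G (lmap F l) = l.
Proof.
  intros E A. unfold lmap. rewrite map_map. rewrite <- (map_id l) at 2. apply map_ext_in.
  intros [c x] Hp. simpl. rewrite E; auto. apply (A (c, x) Hp).
Qed.

Lemma supported_in_app B l l' : supported_in B l -> supported_in B l' -> supported_in B (l ++ l').
Proof. intros A A' p Hp. apply in_app_or in Hp. destruct Hp; auto. Qed.

Lemma supported_in_lscale B c l : supported_in B l -> supported_in B (lscale c l).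
Proof.
  intros A p Hp. apply in_map_iff in Hp. destruct Hp as [q [<- Hq]]. apply (A q Hq).
Qed.

Lemma supported_in_lmap B B' F l :
  (forall b, B b -> B' (F b)) -> supported_in B l -> supported_in B' (lmap F l).
Proof.
  intros HF A p Hp. apply in_map_iff in Hp. destruct Hp as [q [<- Hq]]. apply HF, A, Hq.
Qed.

Lemma lincomb_in_subspace (M : H -> Prop) l : subspace M -> supported_in M l -> M (lincomb l).
Proof.
  intros SM. induction l as [|p l IH]; intro A; simpl. apply SM.
  apply SM. apply SM, A; simpl; auto. apply IH. intros q Hq; apply A; simpl; auto.
Qed.

End LinearCombinations.

Lemma polarization {H : PreHilbert} (a b : H) : inner a b =
  mkC ((nsq (vadd a b) - nsq a - nsq b) / 2) ((nsq (vadd a (vscal Ci b)) - nsq a - nsq b) / 2).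
Proof.
  unfold nsq. inner_expand.
  apply C_ext; simpl; rewrite ?inner_self_Im, ?(inner_Re_sym a b), ?(inner_Im_sym a b); field.
Qed.

Lemma cauchy_of_isometric {H : PreHilbert} (u v : nat -> H) :
  (forall n k, hnorm (vsub (v n) (v k)) = hnorm (vsub (u n) (u k))) -> cauchy u -> cauchy v.
Proof.
  intros E Cu e He. destruct (Cu e He) as [N HN]. exists N. intros n k Hn Hk. rewrite E. auto.
Qed.

Lemma limit_distance_eq {H : PreHilbert} (u v : nat -> H) a b p q :
  converges u a -> converges v b ->
  (forall n, hnorm (vsub (u n) p) = hnorm (vsub (v n) q)) ->
  hnorm (vsub a p) = hnorm (vsub b q).
Proof.
  intros Ca Cb E.
  assert (Le : forall e, 0 < e -> Rabs (hnorm (vsub a p) - hnorm (vsub b q)) <= e).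
  { intros e He. destruct (Ca (e/2)) as [N1 H1]; [lra|]. destruct (Cb (e/2)) as [N2 H2]; [lra|].
    set (n := max N1 N2). specialize (H1 n ltac:(lia)). specialize (H2 n ltac:(lia)).
    pose proof (vsub_triangle a (u n) p). pose proof (vsub_triangle (u n) a p).
    pose proof (vsub_triangle b (v n) q). pose proof (vsub_triangle (v n) b q).
    rewrite (vsub_sym a (u n)) in *. rewrite (vsub_sym b (v n)) in *. rewrite E in *.
    apply Rabs_le. lra. }
  assert (Z : Rabs (hnorm (vsub a p) - hnorm (vsub b q)) <= 0) by (apply Rle_0_of_le_eps, Le).
  pose proof (Rabs_pos (hnorm (vsub a p) - hnorm (vsub b q))).
  destruct (Req_dec (hnorm (vsub a p) - hnorm (vsub b q)) 0) as [|NZ]; [lra|].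
  pose proof (Rabs_pos_lt _ NZ). lra.
Qed.

Section OnbExtension.
Context {H : HilbertSpace} (B1 M1 M2 : H -> Prop) (F : H -> H).
Hypothesis F_inner : forall b b', B1 b -> B1 b' -> inner (F b) (F b') = inner b b'.
Hypothesis F_in : forall b, B1 b -> M2 (F b).
Hypothesis onb1 : is_onb M1 B1.
Hypotheses (SM1 : subspace M1) (SM2 : subspace M2) (CM2 : closed_set M2).

Lemma inner_lincomb_lmap_r b l : B1 b -> supported_in B1 l ->
  inner (F b) (lincomb (lmap F l)) = inner b (lincomb l).
Proof.
  intros Bb. induction l as [|p l IH]; intro A; simpl. rewrite !inner_0_r; auto.
  rewrite !inner_add_r, !inner_scal_r, F_inner, IH; auto.
  intros q Hq; apply A; simpl; auto. apply A; simpl; auto.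
Qed.

Lemma inner_lincomb_lmap l l' : supported_in B1 l -> supported_in B1 l' ->
  inner (lincomb (lmap F l)) (lincomb (lmap F l')) = inner (lincomb l) (lincomb l').
Proof.
  induction l as [|p l IH]; intros A A'; simpl. rewrite !inner_0_l; auto.
  rewrite !inner_add_l, !inner_scal_l, inner_lincomb_lmap_r, IH; auto.
  intros q Hq; apply A; simpl; auto. apply A; simpl; auto.
Qed.

Lemma hnorm_vsub_lincomb_lmap l l' : supported_in B1 l -> supported_in B1 l' ->
  hnorm (vsub (lincomb (lmap F l)) (lincomb (lmap F l'))) = hnorm (vsub (lincomb l) (lincomb l')).
Proof.
  intros A A'. rewrite !lincomb_vsub, <- lmap_lscale, <- lmap_app. unfold hnorm.
  rewrite inner_lincomb_lmap; auto;
    apply supported_in_app; auto; apply supported_in_lscale; auto.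
Qed.

Lemma onb_approx_sequence x : M1 x -> exists ls : nat -> list (C * H),
  (forall n, supported_in B1 (ls n)) /\ converges (fun n => lincomb (ls n)) x.
Proof.
  intro Mx. destruct onb1 as [_ [_ [_ Dense]]].
  assert (Hch : forall n : nat, {l | supported_in B1 l /\ hnorm (vsub x (lincomb l)) < / (INR n + 1)}).
  { intro n. apply constructive_indefinite_description, Dense, inv_INR_S_pos. exact Mx. }
  exists (fun n => proj1_sig (Hch n)). split; [intro n; apply (proj2_sig (Hch n))|].
  intros e He. destruct (inv_INR_S_small e He) as [N HN]. exists N. intros n Hn.
  rewrite vsub_sym. pose proof (proj2 (proj2_sig (Hch n))). specialize (HN n Hn). lra.
Qed.

Definition extension_spec (x y : H) : Prop := M2 y /\ forall l, supported_in B1 l ->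
  hnorm (vsub y (lincomb (lmap F l))) = hnorm (vsub x (lincomb l)).

Lemma extension_spec_exists x : M1 x -> exists y, extension_spec x y.
Proof.
  intro Mx. destruct (onb_approx_sequence x Mx) as [ls [Bls Cls]].
  set (ys := fun n => lincomb (lmap F (ls n))).
  assert (Cy : cauchy ys).
  { apply (cauchy_of_isometric (fun n => lincomb (ls n))); [|exact (converges_cauchy _ _ Cls)].
    intros n k. apply hnorm_vsub_lincomb_lmap; auto. }
  destruct (complete H ys Cy) as [y Cy']. exists y. split.
  - apply (CM2 ys); auto. intro n. apply lincomb_in_subspace; auto.
    apply (supported_in_lmap B1); auto.
  - intros l Bl. apply (limit_distance_eq ys (fun n => lincomb (ls n))); auto.
    intro n. apply hnorm_vsub_lincomb_lmap; auto.
Qed.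

Definition onb_extension (x : H) : H :=
  match excluded_middle_informative (M1 x) with
  | left p => proj1_sig (constructive_indefinite_description _ (extension_spec_exists x p))
  | right _ => vzero
  end.

Lemma onb_extension_spec x : M1 x -> extension_spec x (onb_extension x).
Proof.
  intro Mx. unfold onb_extension. destruct (excluded_middle_informative (M1 x)); [|contradiction].
  apply proj2_sig.
Qed.

Lemma onb_extension_in x : M1 x -> M2 (onb_extension x).
Proof. intro Mx. apply (onb_extension_spec x Mx). Qed.

Lemma onb_extension_limit (ls : nat -> list (C * H)) x : M1 x ->
  (forall n, supported_in B1 (ls n)) -> converges (fun n => lincomb (ls n)) x ->
  converges (fun n => lincomb (lmap F (ls n))) (onb_extension x).
Proof.
  intros Mx Bls Cls e He. destruct (Cls e He) as [N HN]. exists N. intros n Hn.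
  rewrite vsub_sym, (proj2 (onb_extension_spec x Mx)), vsub_sym; auto.
Qed.

Lemma onb_extension_add x y : M1 x -> M1 y ->
  onb_extension (vadd x y) = vadd (onb_extension x) (onb_extension y).
Proof.
  intros Mx My.
  destruct (onb_approx_sequence x Mx) as [ls [Bls Cls]].
  destruct (onb_approx_sequence y My) as [ks [Bks Cks]].
  apply (converges_unique (fun n => lincomb (lmap F (ls n ++ ks n)))).
  - apply onb_extension_limit. apply SM1; auto.
    intro n. apply supported_in_app; auto.
    apply (converges_ext (fun n => vadd (lincomb (ls n)) (lincomb (ks n)))).
    intro n; symmetry; apply lincomb_app. apply converges_add; auto.
  - apply (converges_ext (fun n => vadd (lincomb (lmap F (ls n))) (lincomb (lmap F (ks n))))).
    intro n. rewrite lmap_app, lincomb_app. reflexivity.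
    apply converges_add; apply onb_extension_limit; auto.
Qed.

Lemma onb_extension_scal c x : M1 x -> onb_extension (vscal c x) = vscal c (onb_extension x).
Proof.
  intros Mx. destruct (onb_approx_sequence x Mx) as [ls [Bls Cls]].
  apply (converges_unique (fun n => lincomb (lmap F (lscale c (ls n))))).
  - apply onb_extension_limit. apply SM1; auto.
    intro n. apply supported_in_lscale; auto.
    apply (converges_ext (fun n => vscal c (lincomb (ls n)))).
    intro n; symmetry; apply lincomb_lscale. apply converges_scal; auto.
  - apply (converges_ext (fun n => vscal c (lincomb (lmap F (ls n))))).
    intro n. rewrite lmap_lscale, lincomb_lscale. reflexivity.
    apply converges_scal, onb_extension_limit; auto.
Qed.

Lemma onb_extension_nsq x : M1 x -> nsq (onb_extension x) = nsq x.
Proof.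
  intro Mx. pose proof (proj2 (onb_extension_spec x Mx) nil ltac:(intros p [])) as E.
  simpl in E. rewrite !vsub_0_r in E. rewrite <- !hnorm_sq, E. reflexivity.
Qed.

Lemma onb_extension_inner x y : M1 x -> M1 y ->
  inner (onb_extension x) (onb_extension y) = inner x y.
Proof.
  intros Mx My. assert (Miy : M1 (vscal Ci y)) by (apply SM1; auto).
  rewrite !polarization, <- onb_extension_add, <- onb_extension_scal, <- onb_extension_add,
    !onb_extension_nsq; auto; apply SM1; auto.
Qed.

End OnbExtension.

Section SameDimension.
Context {H : HilbertSpace}.

Definition basis_map (B1 B2 : H -> Prop) (f : {x | B1 x} -> {y | B2 y}) (x : H) : H :=
  match excluded_middle_informative (B1 x) with
  | left p => proj1_sig (f (exist _ x p))
  | right _ => vzero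
  end.

Lemma basis_map_val B1 B2 f x (p : B1 x) : basis_map B1 B2 f x = proj1_sig (f (exist _ x p)).
Proof.
  unfold basis_map. destruct (excluded_middle_informative (B1 x)); [|contradiction].
  do 3 f_equal. apply proof_irrelevance.
Qed.

Lemma basis_map_in B1 B2 f x : B1 x -> B2 (basis_map B1 B2 f x).
Proof. intro p. rewrite (basis_map_val _ _ _ _ p). apply proj2_sig. Qed.

Lemma basis_map_cancel B1 B2 (f : {x | B1 x} -> {y | B2 y}) g :
  (forall x, g (f x) = x) -> forall x, B1 x -> basis_map B2 B1 g (basis_map B1 B2 f x) = x.
Proof.
  intros gf x p. rewrite (basis_map_val _ _ _ _ (basis_map_in B1 B2 f x p)).
  assert (E : exist (fun y => B2 y) (basis_map B1 B2 f x) (basis_map_in B1 B2 f x p) = f (exist _ x p))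
    by (apply sig_eq, basis_map_val).
  rewrite E, gf. reflexivity.
Qed.

Lemma basis_map_inner B1 B2 M1 M2 (f : {x | B1 x} -> {y | B2 y}) g :
  (forall x, g (f x) = x) -> is_onb M1 B1 -> is_onb M2 B2 ->
  forall b b', B1 b -> B1 b' -> inner (basis_map B1 B2 f b) (basis_map B1 B2 f b') = inner b b'.
Proof.
  intros gf [_ [N1 [O1 _]]] [_ [N2 [O2 _]]] b b' Bb Bb'.
  destruct (classic (b = b')) as [<-|N].
  - rewrite (N1 b Bb), N2 by (apply basis_map_in; auto). reflexivity.
  - rewrite (O1 b b'), O2; auto; try (apply basis_map_in; auto).
    intro E. apply N.
    rewrite <- (basis_map_cancel B1 B2 f g gf b Bb), <- (basis_map_cancel B1 B2 f g gf b' Bb'), E.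
    reflexivity.
Qed.

Lemma unitary_of_same_dim (M1 M2 : H -> Prop) :
  subspace M1 -> closed_set M1 -> subspace M2 -> closed_set M2 -> same_dim M1 M2 ->
  exists V : H -> H, (forall x, M2 x -> M1 (V x)) /\
    (forall x y, M2 x -> M2 y -> V (vadd x y) = vadd (V x) (V y)) /\
    (forall c x, M2 x -> V (vscal c x) = vscal c (V x)) /\
    (forall x y, M2 x -> M2 y -> inner (V x) (V y) = inner x y) /\
    (forall y, M1 y -> exists x, M2 x /\ V x = y).
Proof.
  intros SM1 CM1 SM2 CM2 [B1 [B2 [O1 [O2 [f [g [gf fg]]]]]]].
  set (G := basis_map B2 B1 g). set (F := basis_map B1 B2 f).
  assert (G_in : forall b, B2 b -> M1 (G b)) by (intros; apply O1, basis_map_in; auto).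
  assert (F_in : forall b, B1 b -> M2 (F b)) by (intros; apply O2, basis_map_in; auto).
  pose proof (basis_map_inner B2 B1 M2 M1 g f fg O2 O1) as G_inner.
  pose proof (basis_map_inner B1 B2 M1 M2 f g gf O1 O2) as F_inner.
  set (V := onb_extension B2 M2 M1 G G_inner G_in O2 SM1 CM1).
  set (W := onb_extension B1 M1 M2 F F_inner F_in O1 SM2 CM2).
  exists V. split; [|split; [|split; [|split]]].
  - intros x Mx. apply onb_extension_in; auto.
  - intros x y Mx My. apply onb_extension_add; auto.
  - intros c x Mx. apply onb_extension_scal; auto.
  - intros x y Mx My. apply onb_extension_inner; auto.
  - intros y My. exists (W y). split; [apply onb_extension_in; auto|].
    (* V (W y) and y have the same distance to every finite combination of the basis B1 *)
    apply vsub_eq0, hnorm_small_eq0. intros e He.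
    destruct (proj2 (proj2 (proj2 O1)) y My (e/2)) as [l [Bl Hl]]; [lra|].
    assert (Bm : supported_in B2 (lmap F l))
      by (apply (supported_in_lmap B1); auto; intros; apply basis_map_in; auto).
    pose proof (proj2 (onb_extension_spec B2 M2 M1 G G_inner G_in O2 SM1 CM1 (W y)
      ltac:(apply onb_extension_in; auto)) _ Bm) as E1.
    pose proof (proj2 (onb_extension_spec B1 M1 M2 F F_inner F_in O1 SM2 CM2 y My) l Bl) as E2.
    fold V in E1. fold W in E2. rewrite E2 in E1.
    rewrite (lmap_lmap_id F G B1) in E1 by (auto; intros; apply basis_map_cancel; auto).
    pose proof (vsub_triangle (V (W y)) (lincomb l) y). rewrite (vsub_sym (lincomb l) y) in H0. lra.
Qed.

End SameDimension.

Definition shifted_range {H : PreHilbert} (D : H -> Prop) (T : H -> H) (mu : C) (y : H) : Prop :=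
  exists u, D u /\ y = vsub (T u) (vscal mu u).

Section Adjoint.
Context {H : PreHilbert} (D : H -> Prop) (T : H -> H).

Lemma adj_graph_add g h g' h' : adj_graph D T g h -> adj_graph D T g' h' ->
  adj_graph D T (vadd g g') (vadd h h').
Proof. intros A A' f Df. rewrite !inner_add_r, A, A'; auto. Qed.

Lemma adj_graph_scal a g h : adj_graph D T g h -> adj_graph D T (vscal a g) (vscal a h).
Proof. intros A f Df. rewrite !inner_scal_r, A; auto. Qed.

Lemma adj_graph_vsub g h g' h' : adj_graph D T g h -> adj_graph D T g' h' ->
  adj_graph D T (vsub g g') (vsub h h').
Proof.
  intros. unfold vsub. rewrite !vopp_eq_scal. apply adj_graph_add; auto. apply adj_graph_scal; auto.
Qed.

Lemma adj_dom_add f g : adj_dom D T f -> adj_dom D T g -> adj_dom D T (vadd f g).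
Proof. intros [h Hf] [k Hg]. exists (vadd h k). apply adj_graph_add; auto. Qed.

Lemma adj_dom_scal c f : adj_dom D T f -> adj_dom D T (vscal c f).
Proof. intros [h Hf]. exists (vscal c h). apply adj_graph_scal; auto. Qed.

Lemma defect_adj_dom l v : defect D T l v -> adj_dom D T v.
Proof. intro N. exists (vscal l v). exact N. Qed.

Lemma defect_subspace l : subspace (defect D T l).
Proof.
  split; [|split].
  - intros f Df. rewrite vscal_0_r, !inner_0_r. reflexivity.
  - intros x y Dx Dy f Df. rewrite vscal_distr_v, !inner_add_r, Dx, Dy; auto.
  - intros a x Dx f Df. rewrite vscal_assoc, !inner_scal_r, Dx by auto. rewrite inner_scal_r.
    C_ring.
Qed.

Lemma defect_iff_orthogonal_range l g :
  defect D T l g <-> forall w, shifted_range D T (Cconj l) w -> inner g w = C0.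
Proof.
  split.
  - intros Dg w [f [Df ->]]. specialize (Dg f Df).
    inner_expand. rewrite (inner_conj _ (T f) g), Dg, (inner_conj _ f g). C_ring.
  - intros O f Df. specialize (O _ (ex_intro _ f (conj Df eq_refl))).
    inner_expand. rewrite (inner_conj _ (T f) g), (inner_conj _ f g) in O.
    apply C_eq_components in O as [O1 O2]. simpl in O1, O2. C_ring; lra.
Qed.

Lemma defect_closed l : closed_set (defect D T l).
Proof.
  intros u g Hu Cu. apply defect_iff_orthogonal_range.
  apply (closed_orthogonal _ u g); auto. intro n. apply defect_iff_orthogonal_range, Hu.
Qed.

Lemma adj_graph_unique g h1 h2 : dense D ->
  adj_graph D T g h1 -> adj_graph D T g h2 -> h1 = h2.
Proof.
  intros Hdense A1 A2. apply vsub_eq0, (dense_orthogonal_zero D); auto.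
  intros f Df. inner_expand. rewrite <- A1, <- A2 by auto. C_ring.
Qed.

End Adjoint.

Section SymmetricOperator.
Context {H : PreHilbert} (D : H -> Prop) (T : H -> H).
Hypothesis Hop : is_operator D T.
Hypothesis Hsym : symmetric_op D T.

Lemma op_vsub x y : D x -> D y -> T (vsub x y) = vsub (T x) (T y).
Proof.
  destruct Hop as [[_ [_ Ds]] [Ta Ts]]. intros. unfold vsub. rewrite !vopp_eq_scal, Ta, Ts; auto.
Qed.

Lemma adj_graph_of_dom u : D u -> adj_graph D T u (T u).
Proof. intros Du f Df. apply Hsym; auto. Qed.

Lemma inner_T_self_Im u : D u -> Im (inner (T u) u) = 0.
Proof.
  intro Du. pose proof (Hsym u u Du Du) as E. rewrite (inner_conj _ (T u) u) in E.
  apply (f_equal Im) in E. simpl in E. lra.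
Qed.

Lemma hnorm_shifted_lower_bound (mu : C) u : D u ->
  Rabs (Im mu) * hnorm u <= hnorm (vsub (T u) (vscal mu u)).
Proof.
  intro Du. set (w := vsub (T u) (vscal mu u)).
  (* Im ((T - mu) u, u) = - Im mu |u|^2 because (T u, u) is real *)
  assert (E : Im (inner w u) = - Im mu * nsq u).
  { unfold w, nsq. inner_expand. simpl. rewrite inner_T_self_Im, inner_self_Im by auto. ring. }
  pose proof (cauchy_schwarz_Im w u) as CS. rewrite E, <- hnorm_sq in CS.
  pose proof (hnorm_nonneg u). pose proof (hnorm_nonneg w). pose proof (Rabs_pos (Im mu)).
  rewrite Rabs_mult, Rabs_Ropp, (Rabs_right (hnorm u * hnorm u)) in CS by nra.
  destruct (Req_dec (hnorm u) 0) as [Z|Z]; [rewrite Z; nra|].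
  apply Rmult_le_reg_r with (hnorm u); nra.
Qed.

Lemma shifted_range_subspace (mu : C) : subspace (shifted_range D T mu).
Proof.
  destruct Hop as [[D0 [Da Ds]] [Ta Ts]]. split; [|split].
  - exists vzero. split; auto. rewrite <- (vscal_0_l vzero) at 2. rewrite Ts by auto. vec_ring.
  - intros x y [u [Du ->]] [v [Dv ->]]. exists (vadd u v). split; auto.
    rewrite Ta by auto. vec_ring.
  - intros a x [u [Du ->]]. exists (vscal a u). split; auto. rewrite Ts by auto. vec_ring.
Qed.

End SymmetricOperator.

Definition adj_of_parts {H : PreHilbert} (T : H -> H) (u a b : H) : H :=
  vadd (T u) (vadd (vscal Ci a) (vscal (Copp Ci) b)).

Lemma adj_graph_of_parts {H : PreHilbert} (D : H -> Prop) (T : H -> H) :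
  symmetric_op D T -> forall u a b, D u -> defect D T Ci a -> defect D T (Copp Ci) b ->
  adj_graph D T (vadd u (vadd a b)) (adj_of_parts T u a b).
Proof.
  intros Hsym u a b Du Na Nb. apply adj_graph_add; [apply adj_graph_of_dom; auto|].
  apply adj_graph_add; auto.
Qed.

Lemma green_identity_parts {H : PreHilbert} (D : H -> Prop) (T : H -> H) u a b u' a' b' :
  symmetric_op D T -> D u -> D u' ->
  defect D T Ci a -> defect D T (Copp Ci) b -> defect D T Ci a' -> defect D T (Copp Ci) b' ->
  Csub (inner (adj_of_parts T u a b) (vadd u' (vadd a' b')))
       (inner (vadd u (vadd a b)) (adj_of_parts T u' a' b')) =
  Cmul (mkC 0 2) (Csub (inner a a') (inner b b')).
Proof.
  intros Hsym Du Du' Na Nb Na' Nb'. unfold adj_of_parts, Csub. inner_expand.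
  rewrite (Hsym u u' Du Du'), (Na' u Du), (Nb' u Du).
  rewrite (inner_conj _ (T u') a), (inner_conj _ (T u') b), (Na u' Du'), (Nb u' Du').
  inner_expand. rewrite (inner_conj _ a u'), (inner_conj _ b u'). C_ring.
Qed.

Lemma shifted_range_closed {H : HilbertSpace} (D : H -> Prop) (T : H -> H) (mu : C) :
  is_operator D T -> symmetric_op D T -> closed_op D T -> Im mu <> 0 ->
  closed_set (shifted_range D T mu).
Proof.
  intros Hop Hsym Hcl Hmu y l Hy Cy.
  assert (Hch : forall n, {u | D u /\ y n = vsub (T u) (vscal mu u)})
    by (intro n; apply constructive_indefinite_description, Hy).
  set (u := fun n => proj1_sig (Hch n)).
  assert (Du : forall n, D (u n)) by (intro n; apply (proj2_sig (Hch n))).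
  assert (Eu : forall n, y n = vsub (T (u n)) (vscal mu (u n))) by (intro n; apply (proj2_sig (Hch n))).
  assert (Pm : 0 < Rabs (Im mu)) by (apply Rabs_pos_lt; auto).
  (* the lower bound makes the preimages a Cauchy sequence; closedness of T gives the limit *)
  assert (Cu : cauchy u).
  { intros e He. destruct (converges_cauchy y l Cy (e * Rabs (Im mu))) as [N HN]; [nra|].
    exists N. intros n m Hn Hm. specialize (HN n m Hn Hm).
    assert (Dnm : D (vsub (u n) (u m))) by (apply subspace_vsub; auto; apply Hop).
    pose proof (hnorm_shifted_lower_bound D T Hsym mu _ Dnm) as LB.
    replace (vsub (T (vsub (u n) (u m))) (vscal mu (vsub (u n) (u m)))) with (vsub (y n) (y m)) in LB
      by (rewrite (op_vsub D T Hop), !Eu by auto; vec_ring).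
    apply Rmult_lt_reg_l with (Rabs (Im mu)); auto. lra. }
  destruct (complete H u Cu) as [w Cw].
  assert (CT : converges (fun n => T (u n)) (vadd l (vscal mu w))).
  { apply (converges_ext (fun n => vadd (y n) (vscal mu (u n)))).
    intro n. rewrite Eu. vec_ring.
    apply converges_add; auto. apply converges_scal; auto. }
  destruct (Hcl u w _ Du Cw CT) as [Dw Tw]. exists w. split; auto. rewrite Tw. vec_ring.
Qed.

Section VonNeumann.
Context {H : HilbertSpace} (D : H -> Prop) (T : H -> H).
Hypotheses (Hop : is_operator D T) (Hdense : dense D).
Hypotheses (Hcl : closed_op D T) (Hsym : symmetric_op D T).

Lemma von_neumann_exists f : adj_dom D T f ->
  exists u a b, D u /\ defect D T Ci a /\ defect D T (Copp Ci) b /\ f = vadd u (vadd a b).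
Proof.
  intros [h Hh].
  (* split h + i f = (T - conj i) u + z with z orthogonal to that range, i.e. z in N_i *)
  destruct (projection_theorem _ (vadd h (vscal Ci f))
    (shifted_range_subspace D T Hop (Cconj Ci))
    (shifted_range_closed D T (Cconj Ci) Hop Hsym Hcl ltac:(simpl; lra))) as [m [[u [Du Em]] Om]].
  set (z := vsub (vadd h (vscal Ci f)) m) in *.
  assert (Nz : defect D T Ci z) by (apply defect_iff_orthogonal_range; exact Om).
  set (a := vscal (mkC 0 (-1/2)) z).
  assert (Na : defect D T Ci a) by (apply defect_subspace; auto).
  set (b := vsub (vsub f u) a).
  exists u, a, b. split; [auto|split; [auto|split]].
  - assert (A : adj_graph D T b (vsub (vsub h (T u)) (vscal Ci a))).
    { apply adj_graph_vsub; [apply adj_graph_vsub; auto; apply adj_graph_of_dom; auto | apply Na]. }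
    replace (vsub (vsub h (T u)) (vscal Ci a)) with (vscal (Copp Ci) b) in A; [exact A|].
    assert (Eh : h = vsub (vadd (vsub (T u) (vscal (Cconj Ci) u)) z) (vscal Ci f))
      by (unfold z; rewrite Em; vec_ring).
    unfold b, a. rewrite Eh. vec_ring; field.
  - unfold b. vec_ring.
Qed.

Lemma von_neumann_unique u a b : D u -> defect D T Ci a -> defect D T (Copp Ci) b ->
  vadd u (vadd a b) = vzero -> u = vzero /\ a = vzero /\ b = vzero.
Proof.
  intros Du Na Nb E.
  pose proof (adj_graph_of_parts D T Hsym u a b Du Na Nb) as A. rewrite E in A.
  assert (E2 : adj_of_parts T u a b = vzero)
    by (apply (adj_graph_unique D T vzero); auto; intros f Df; rewrite !inner_0_r; reflexivity).
  unfold adj_of_parts in E2.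
  (* pair u + a + b = 0 and its image under S^* with a (resp. b) *)
  assert (Ea : a = vzero).
  { apply nsq_eq0.
    assert (Q : Cadd (inner (vadd u (vadd a b)) a)
                     (inner (vadd (T u) (vadd (vscal Ci a) (vscal (Copp Ci) b))) (vscal Ci a)) = C0)
      by (rewrite E, E2, !inner_0_l; C_ring).
    inner_expand. rewrite (Na u Du) in Q. inner_expand.
    apply (f_equal Re) in Q. simpl in Q. rewrite (inner_Re_sym a b), (inner_Im_sym a b) in Q.
    unfold nsq. lra. }
  assert (Eb : b = vzero).
  { apply nsq_eq0.
    assert (Q : Cadd (inner (vadd u (vadd a b)) b)
                     (inner (vadd (T u) (vadd (vscal Ci a) (vscal (Copp Ci) b))) (vscal (Copp Ci) b)) = C0)
      by (rewrite E, E2, !inner_0_l; C_ring).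
    inner_expand. rewrite (Nb u Du) in Q. inner_expand.
    apply (f_equal Re) in Q. simpl in Q. unfold nsq. lra. }
  subst a b. rewrite !vadd_0 in E. auto.
Qed.

Definition von_neumann_spec (f : H) (p : H * (H * H)) : Prop :=
  defect D T Ci (fst (snd p)) /\ defect D T (Copp Ci) (snd (snd p)) /\
  (adj_dom D T f -> D (fst p) /\ f = vadd (fst p) (vadd (fst (snd p)) (snd (snd p)))).

Lemma von_neumann_spec_exists f : exists p, von_neumann_spec f p.
Proof.
  destruct (classic (adj_dom D T f)) as [A|A].
  - destruct (von_neumann_exists f A) as [u [a [b [Du [Na [Nb E]]]]]].
    exists (u, (a, b)). repeat split; auto.
  - exists (vzero, (vzero, vzero)).
    split; [|split]; [apply defect_subspace | apply defect_subspace | contradiction].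
Qed.

(* The von Neumann components of f; they are meaningful only for f in D(S^* ). *)
Definition von_neumann f := proj1_sig (constructive_indefinite_description _ (von_neumann_spec_exists f)).
Definition dom_part f := fst (von_neumann f).
Definition plus_part f := fst (snd (von_neumann f)).
Definition minus_part f := snd (snd (von_neumann f)).

Lemma plus_part_defect f : defect D T Ci (plus_part f).
Proof. apply (proj2_sig (constructive_indefinite_description _ (von_neumann_spec_exists f))). Qed.

Lemma minus_part_defect f : defect D T (Copp Ci) (minus_part f).
Proof. apply (proj2_sig (constructive_indefinite_description _ (von_neumann_spec_exists f))). Qed.

Lemma von_neumann_decomposition f : adj_dom D T f ->
  D (dom_part f) /\ f = vadd (dom_part f) (vadd (plus_part f) (minus_part f)).
Proof. apply (proj2_sig (constructive_indefinite_description _ (von_neumann_spec_exists f))). Qed.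

Lemma von_neumann_parts_eq f u a b : D u -> defect D T Ci a -> defect D T (Copp Ci) b ->
  f = vadd u (vadd a b) -> dom_part f = u /\ plus_part f = a /\ minus_part f = b.
Proof.
  intros Du Na Nb E.
  assert (Af : adj_dom D T f) by (rewrite E; eexists; apply (adj_graph_of_parts D T Hsym); auto).
  destruct (von_neumann_decomposition f Af) as [Dd Ef].
  destruct (von_neumann_unique (vsub (dom_part f) u) (vsub (plus_part f) a) (vsub (minus_part f) b))
    as [E1 [E2 E3]].
  - apply subspace_vsub; auto. apply Hop.
  - apply subspace_vsub; auto. apply defect_subspace. apply plus_part_defect.
  - apply subspace_vsub; auto. apply defect_subspace. apply minus_part_defect.
  - replace (vadd (vsub (dom_part f) u) (vadd (vsub (plus_part f) a) (vsub (minus_part f) b)))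
      with (vsub (vadd (dom_part f) (vadd (plus_part f) (minus_part f))) (vadd u (vadd a b)))
      by vec_ring.
    rewrite <- Ef, <- E. apply vec_eq_inner. intro z. inner_expand. C_ring.
  - apply vsub_eq0 in E1, E2, E3. auto.
Qed.

Lemma adj_graph_von_neumann f f' : adj_graph D T f f' ->
  f' = adj_of_parts T (dom_part f) (plus_part f) (minus_part f).
Proof.
  intro A. destruct (von_neumann_decomposition f (ex_intro _ f' A)) as [Dd Ef].
  apply (adj_graph_unique D T f); auto. rewrite Ef at 1.
  apply (adj_graph_of_parts D T Hsym); auto. apply plus_part_defect. apply minus_part_defect.
Qed.

Lemma von_neumann_add f g : adj_dom D T f -> adj_dom D T g ->
  dom_part (vadd f g) = vadd (dom_part f) (dom_part g) /\
  plus_part (vadd f g) = vadd (plus_part f) (plus_part g) /\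
  minus_part (vadd f g) = vadd (minus_part f) (minus_part g).
Proof.
  intros Af Ag. destruct (von_neumann_decomposition f Af) as [Df Ef].
  destruct (von_neumann_decomposition g Ag) as [Dg Eg].
  apply von_neumann_parts_eq.
  - apply Hop; auto.
  - apply defect_subspace; apply plus_part_defect.
  - apply defect_subspace; apply minus_part_defect.
  - rewrite Ef at 1. rewrite Eg at 1. vec_ring.
Qed.

Lemma von_neumann_scal c f : adj_dom D T f ->
  dom_part (vscal c f) = vscal c (dom_part f) /\
  plus_part (vscal c f) = vscal c (plus_part f) /\
  minus_part (vscal c f) = vscal c (minus_part f).
Proof.
  intros Af. destruct (von_neumann_decomposition f Af) as [Df Ef].
  apply von_neumann_parts_eq.
  - apply Hop; auto.
  - apply defect_subspace; apply plus_part_defect.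
  - apply defect_subspace; apply minus_part_defect.
  - rewrite Ef at 1. vec_ring.
Qed.

End VonNeumann.

Lemma Cmul_eq0 (a z : C) : Cmul a z = C0 -> a <> C0 -> z = C0.
Proof.
  intros E Na. apply C_eq_components in E as [E1 E2]. simpl in E1, E2.
  assert (Pa : Re a * Re a + Im a * Im a <> 0).
  { intro Z. apply Na. assert (Re a = 0) by nra. assert (Im a = 0) by nra. C_ring; auto. }
  assert (Er : (Re a * Re a + Im a * Im a) * Re z = 0)
    by (replace (_ * Re z) with (Re a * (Re a * Re z - Im a * Im z) + Im a * (Re a * Im z + Im a * Re z))
          by ring; rewrite E1, E2; ring).
  assert (Ei : (Re a * Re a + Im a * Im a) * Im z = 0)
    by (replace (_ * Im z) with (Re a * (Re a * Im z + Im a * Re z) - Im a * (Re a * Re z - Im a * Im z))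
          by ring; rewrite E1, E2; ring).
  apply Rmult_integral in Er, Ei. C_ring; tauto.
Qed.

Definition dom_plus_defect {H : PreHilbert} (D : H -> Prop) (T : H -> H) (l : C) (f : H) : Prop :=
  exists u v, D u /\ defect D T l v /\ f = vadd u v.

Lemma is_PSO_dom_plus_defect {H : PreHilbert} (D : H -> Prop) (T : H -> H) :
  is_PSO D T -> forall l, Cplus l -> forall f, dom_plus_defect D T l f <-> dom_plus_defect D T Ci f.
Proof.
  intros [K [Gm [Gp [Theta [_ [CF Cst]]]]]] l Pl f.
  assert (Pi : Cplus Ci) by (unfold Cplus; simpl; lra).
  unfold dom_plus_defect. rewrite (proj2 (CF l Pl) f), (proj2 (CF Ci Pi) f), (Cst l Ci Pl Pi).
  reflexivity.
Qed.

Section ConstantDefectSums.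
Context {H : PreHilbert} (D : H -> Prop) (T : H -> H).
Hypotheses (Hop : is_operator D T) (Hdense : dense D) (Hsym : symmetric_op D T).
Hypothesis Hconst : forall l, Cplus l -> forall f, dom_plus_defect D T l f <-> dom_plus_defect D T Ci f.

Lemma inner_dom_plus_i_minus_i u v g : D u -> defect D T Ci v -> defect D T (Copp Ci) g ->
  inner (vadd (T u) (vscal Ci v)) g = Cmul Ci (inner (vadd u v) g).
Proof. intros Du Nv Ng. inner_expand. rewrite (Ng u Du). inner_expand. C_ring. Qed.

Lemma defect_split_i l f : Cplus l -> defect D T l f ->
  exists u v, D u /\ defect D T Ci v /\ f = vadd u v /\ vscal l f = vadd (T u) (vscal Ci v).
Proof.
  intros Pl Nf.
  destruct (proj1 (Hconst l Pl f)) as [u [v [Du [Nv Ef]]]].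
  { exists vzero, f. repeat split; [apply Hop | exact Nf | symmetry; apply vadd_0_l]. }
  exists u, v. repeat split; auto.
  apply (adj_graph_unique D T f); auto. rewrite Ef at 1.
  apply adj_graph_add; auto. apply adj_graph_of_dom; auto.
Qed.

Lemma defect_orthogonal_neq_i l f g : Cplus l -> l <> Ci ->
  defect D T l f -> defect D T (Copp Ci) g -> inner f g = C0.
Proof.
  intros Pl Nl Nf Ng. destruct (defect_split_i l f Pl Nf) as [u [v [Du [Nv [Ef Es]]]]].
  (* (S^* f, g) is both l (f, g) and i (f, g) *)
  pose proof (inner_dom_plus_i_minus_i u v g Du Nv Ng) as E.
  rewrite <- Es, <- Ef, inner_scal_l in E.
  apply (Cmul_eq0 (Csub l Ci)).
  - apply C_eq_components in E as [E1 E2]. C_ring; simpl in E1, E2; lra.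
  - intro Z. apply Nl. apply C_eq_components in Z as [Z1 Z2]. simpl in Z1, Z2. C_ring; lra.
Qed.

Lemma defect_orthogonal_i f g :
  defect D T Ci f -> defect D T (Copp Ci) g -> inner f g = C0.
Proof.
  intros Nf Ng. apply C_eq_approx. intros e He.
  set (c := hnorm f * hnorm g + 1).
  assert (Hc : 0 < c) by (unfold c; pose proof (hnorm_nonneg f); pose proof (hnorm_nonneg g); nra).
  set (t := e / c). assert (Ht : 0 < t) by (apply Rdiv_lt_0_compat; auto).
  (* split f along N_mu with mu = (1 + t) i close to i: f = u + w, w orthogonal to g, u small *)
  set (mu := mkC 0 (1 + t)).
  assert (Pmu : Cplus mu) by (unfold Cplus, mu; simpl; lra).
  destruct (proj2 (Hconst mu Pmu f)) as [u [w [Du [Nw Ef]]]].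
  { exists vzero, f. repeat split; [apply Hop | exact Nf | symmetry; apply vadd_0_l]. }
  assert (Ow : inner w g = C0).
  { apply (defect_orthogonal_neq_i mu); auto. intro E. apply (f_equal Im) in E. simpl in E. lra. }
  assert (Es : vscal Ci f = vadd (T u) (vscal mu w)).
  { apply (adj_graph_unique D T f); auto. rewrite Ef at 1.
    apply adj_graph_add; auto. apply adj_graph_of_dom; auto. }
  assert (Eu : vsub (T u) (vscal mu u) = vscal (RtoC t) (vscal (Copp Ci) f)).
  { replace (T u) with (vsub (vscal Ci f) (vscal mu w)) by (rewrite Es; vec_ring).
    rewrite Ef. unfold mu. vec_ring. }
  pose proof (hnorm_shifted_lower_bound D T Hsym mu u Du) as LB.
  rewrite Eu, hnorm_scal_R, hnorm_scal in LB. simpl in LB.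
  replace (- 0 * - 0 + - (1) * - (1)) with 1 in LB by ring. rewrite sqrt_1 in LB.
  rewrite !Rabs_right in LB by lra.
  assert (Hu : hnorm u <= t * hnorm f) by (pose proof (hnorm_nonneg u); pose proof (hnorm_nonneg f); nra).
  assert (Efg : inner f g = inner u g) by (rewrite Ef, inner_add_l, Ow; C_ring).
  assert (B : t * hnorm f * hnorm g <= e).
  { replace e with (t * c) by (unfold t; field; lra). unfold c.
    pose proof (hnorm_nonneg f); pose proof (hnorm_nonneg g). nra. }
  rewrite Efg. simpl. rewrite !Rminus_0_r. split.
  - eapply Rle_trans; [apply inner_Re_le; exact Hu | lra].
  - eapply Rle_trans; [apply inner_Im_le; exact Hu | lra].
Qed.

Lemma defect_orthogonal_of_constant_sums l f g : Cplus l ->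
  defect D T l f -> defect D T (Copp Ci) g -> inner f g = C0.
Proof.
  intros Pl. destruct (classic (l = Ci)) as [->|Nl].
  - apply defect_orthogonal_i.
  - apply defect_orthogonal_neq_i; auto.
Qed.

End ConstantDefectSums.

Lemma inner_dom_plus_defect_Im {H : PreHilbert} (D : H -> Prop) (T : H -> H) u mu h :
  symmetric_op D T -> D u -> defect D T mu h ->
  Im (inner (vadd (T u) (vscal mu h)) (vadd u h)) = Im mu * nsq h.
Proof.
  intros Hsym Du Nh. inner_expand. rewrite (Nh u Du). inner_expand. simpl.
  rewrite (inner_T_self_Im D T Hsym u Du), (inner_self_Im h). unfold nsq.
  rewrite (inner_Re_sym u h), (inner_Im_sym u h). ring.
Qed.

Lemma defect_i_shifted_range_zero {H : PreHilbert} (D : H -> Prop) (T : H -> H) mu k :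
  is_operator D T -> dense D -> symmetric_op D T -> Im mu < 0 ->
  defect D T Ci k -> shifted_range D T mu k -> k = vzero.
Proof.
  intros Hop Hdense Hsym Hmu Nk [w [Dw Ek]].
  (* k = c w + h with h in N_mu; then |k|^2 = Im (S^* k, k) = Im mu |h|^2 <= 0 *)
  set (c := Csub Ci mu). set (h := vsub k (vscal c w)).
  assert (Nh : defect D T mu h).
  { assert (A : adj_graph D T h (vsub (vscal Ci k) (vscal c (T w)))).
    { apply adj_graph_vsub. apply Nk. apply adj_graph_scal, adj_graph_of_dom; auto. }
    unfold defect. replace (vscal mu h) with (vsub (vscal Ci k) (vscal c (T w))); [exact A|].
    unfold h, c. rewrite Ek at 1. rewrite Ek at 1. vec_ring. }
  assert (Dcw : D (vscal c w)) by (apply Hop; auto).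
  pose proof (inner_dom_plus_defect_Im D T (vscal c w) mu h Hsym Dcw Nh) as I.
  assert (Ekh : k = vadd (vscal c w) h) by (unfold h; vec_ring).
  assert (Es : vscal Ci k = vadd (T (vscal c w)) (vscal mu h)).
  { apply (adj_graph_unique D T k); auto. rewrite Ekh at 1.
    apply adj_graph_add; auto. apply adj_graph_of_dom; auto. }
  rewrite <- Es, <- Ekh, inner_scal_l in I. simpl in I. rewrite inner_self_Im in I.
  pose proof (nsq_nonneg h). pose proof (nsq_nonneg k).
  apply nsq_eq0. unfold nsq in *. nra.
Qed.

Lemma orthogonal_defect_in_shifted_range {H : HilbertSpace} (D : H -> Prop) (T : H -> H) l k :
  is_operator D T -> symmetric_op D T -> closed_op D T -> Im l <> 0 ->
  (forall v, defect D T l v -> inner v k = C0) -> shifted_range D T (Cconj l) k.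
Proof.
  intros Hop Hsym Hcl Hl Ok.
  destruct (projection_theorem _ k (shifted_range_subspace D T Hop (Cconj l))
    (shifted_range_closed D T (Cconj l) Hop Hsym Hcl ltac:(simpl; intro; apply Hl; lra))) as [m [Rm Om]].
  set (z := vsub k m) in *.
  assert (Nz : defect D T l z) by (apply defect_iff_orthogonal_range; exact Om).
  replace k with m; [exact Rm|]. symmetry. apply vsub_eq0, nsq_eq0. fold z.
  assert (E1 : inner z k = C0) by (apply Ok; auto).
  assert (E2 : inner z m = C0) by (apply Om, Rm).
  unfold nsq, z at 2. inner_expand. rewrite E1, E2. simpl. ring.
Qed.

Section OrthogonalDefects.
Context {H : HilbertSpace} (D : H -> Prop) (T : H -> H).
Hypotheses (Hop : is_operator D T) (Hdense : dense D).
Hypotheses (Hcl : closed_op D T) (Hsym : symmetric_op D T).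
Hypothesis Horth : forall l, Cplus l -> forall f g,
  defect D T l f -> defect D T (Copp Ci) g -> inner f g = C0.

Notation dom_part := (dom_part D T Hop Hcl Hsym).
Notation plus_part := (plus_part D T Hop Hcl Hsym).
Notation minus_part := (minus_part D T Hop Hcl Hsym).

Lemma minus_part_defect_zero l v : Cplus l -> defect D T l v -> minus_part v = vzero.
Proof.
  intros Pl Nv.
  destruct (von_neumann_decomposition D T Hop Hcl Hsym v (defect_adj_dom D T l v Nv)) as [Du Ev].
  pose proof (adj_graph_von_neumann D T Hop Hdense Hcl Hsym v _ Nv) as Es. unfold adj_of_parts in Es.
  set (u := dom_part v) in *. set (a := plus_part v) in *. set (b := minus_part v) in *.
  assert (Nb : defect D T (Copp Ci) b) by apply minus_part_defect.
  (* pair the two expressions of S^* v with b: the N_i part drops out, leaving |b|^2 = 0 *)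
  assert (Q : Cadd (inner v b) (inner (vscal l v) (vscal (Copp Ci) b)) = C0).
  { rewrite inner_scal_l, inner_scal_r, (Horth l Pl v b Nv Nb). C_ring. }
  rewrite Es in Q. rewrite Ev in Q at 1. inner_expand. rewrite (Nb u Du) in Q. inner_expand.
  apply (f_equal Re) in Q. simpl in Q. apply nsq_eq0. unfold nsq. lra.
Qed.

Lemma defect_von_neumann l v : Cplus l -> defect D T l v ->
  D (dom_part v) /\ v = vadd (dom_part v) (plus_part v) /\
  vscal l v = vadd (T (dom_part v)) (vscal Ci (plus_part v)).
Proof.
  intros Pl Nv.
  destruct (von_neumann_decomposition D T Hop Hcl Hsym v (defect_adj_dom D T l v Nv)) as [Du Ev].
  pose proof (adj_graph_von_neumann D T Hop Hdense Hcl Hsym v _ Nv) as Es. unfold adj_of_parts in Es.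
  rewrite (minus_part_defect_zero l v Pl Nv), vscal_0_r, vadd_0 in Es.
  rewrite (minus_part_defect_zero l v Pl Nv), vadd_0 in Ev. auto.
Qed.

Lemma nsq_plus_part l v : Cplus l -> defect D T l v -> nsq (plus_part v) = Im l * nsq v.
Proof.
  intros Pl Nv. destruct (defect_von_neumann l v Pl Nv) as [Du [Ev Es]].
  pose proof (inner_dom_plus_defect_Im D T _ Ci _ Hsym Du (plus_part_defect D T Hop Hcl Hsym v)) as I.
  rewrite <- Es, <- Ev, inner_scal_l in I. simpl in I. rewrite inner_self_Im in I.
  unfold nsq in *. lra.
Qed.

Lemma hnorm_plus_part l v : Cplus l -> defect D T l v ->
  hnorm (plus_part v) = sqrt (Im l) * hnorm v.
Proof.
  intros Pl Nv. unfold hnorm. fold (nsq (plus_part v)) (nsq v).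
  rewrite (nsq_plus_part l v Pl Nv). apply sqrt_mult. unfold Cplus in Pl; lra. apply nsq_nonneg.
Qed.

Lemma plus_part_vsub l v w : defect D T l v -> defect D T l w ->
  plus_part (vsub v w) = vsub (plus_part v) (plus_part w).
Proof.
  intros Nv Nw. pose proof (defect_adj_dom D T l v Nv) as Av.
  pose proof (defect_adj_dom D T l w Nw) as Aw.
  unfold vsub. rewrite !vopp_eq_scal.
  rewrite (proj1 (proj2 (von_neumann_add D T Hop Hdense Hcl Hsym _ _ Av (adj_dom_scal D T _ _ Aw)))).
  rewrite (proj1 (proj2 (von_neumann_scal D T Hop Hdense Hcl Hsym _ _ Aw))). reflexivity.
Qed.

Definition plus_part_image l (a : H) : Prop := exists v, defect D T l v /\ a = plus_part v.

Lemma plus_part_image_subspace l : subspace (plus_part_image l).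
Proof.
  split; [|split].
  - exists vzero. split; [apply defect_subspace|]. symmetry.
    apply (von_neumann_parts_eq D T Hop Hdense Hcl Hsym vzero vzero vzero vzero);
      try apply defect_subspace; [apply Hop | rewrite !vadd_0; auto].
  - intros x y [v [Nv ->]] [w [Nw ->]]. exists (vadd v w). split; [apply defect_subspace; auto|].
    symmetry. apply (von_neumann_add D T Hop Hdense Hcl Hsym _ _
      (defect_adj_dom D T l v Nv) (defect_adj_dom D T l w Nw)).
  - intros c x [v [Nv ->]]. exists (vscal c v). split; [apply defect_subspace; auto|].
    symmetry. apply (von_neumann_scal D T Hop Hdense Hcl Hsym _ _ (defect_adj_dom D T l v Nv)).
Qed.

Lemma plus_part_image_closed l : Cplus l -> closed_set (plus_part_image l).
Proof.
  intros Pl as_ a Ha Ca.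
  assert (Hch : forall n, {v | defect D T l v /\ as_ n = plus_part v})
    by (intro n; apply constructive_indefinite_description, Ha).
  set (vs := fun n => proj1_sig (Hch n)).
  assert (Nvs : forall n, defect D T l (vs n)) by (intro n; apply (proj2_sig (Hch n))).
  assert (Evs : forall n, as_ n = plus_part (vs n)) by (intro n; apply (proj2_sig (Hch n))).
  set (s := sqrt (Im l)). assert (Hs : 0 < s) by (apply sqrt_lt_R0; exact Pl).
  assert (Hvw : forall v w, defect D T l v -> defect D T l w ->
            hnorm (vsub (plus_part v) (plus_part w)) = s * hnorm (vsub v w)).
  { intros v w Nv Nw. rewrite <- (plus_part_vsub l) by auto.
    apply hnorm_plus_part; auto. apply subspace_vsub; auto. apply defect_subspace. }
  assert (Cv : cauchy vs).
  { intros e He. destruct (converges_cauchy as_ a Ca (s * e)) as [N HN]; [nra|].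
    exists N. intros n m Hn Hm. specialize (HN n m Hn Hm). rewrite !Evs, Hvw in HN by auto. nra. }
  destruct (complete H vs Cv) as [v Cv'].
  assert (Nv : defect D T l v) by (apply (defect_closed D T l vs v); auto).
  exists v. split; auto. apply (converges_unique as_); auto.
  intros e He. destruct (Cv' (e / s)) as [N HN]; [apply Rdiv_lt_0_compat; lra|].
  exists N. intros n Hn. rewrite Evs, Hvw by auto. specialize (HN n Hn).
  apply Rmult_lt_compat_l with (r := s) in HN; auto.
  replace (s * (e / s)) with e in HN by (field; lra). exact HN.
Qed.

Lemma orthogonal_plus_part_image_defect l k : Cplus l -> defect D T Ci k ->
  (forall v, defect D T l v -> inner (plus_part v) k = C0) ->
  forall v, defect D T l v -> inner v k = C0.
Proof.
  intros Pl Nk Ok v Nv. destruct (defect_von_neumann l v Pl Nv) as [Du [Ev Es]].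
  (* (S^* v, k) is both l (v, k) and -i (v, k) *)
  assert (Q : inner (vscal l v) k = Cmul (Copp Ci) (inner v k)).
  { assert (Ivk : inner v k = inner (dom_part v) k)
      by (rewrite Ev at 1; rewrite inner_add_l, (Ok v Nv); C_ring).
    rewrite Es, Ivk. inner_expand. rewrite (Nk _ Du), (Ok v Nv). inner_expand. C_ring. }
  rewrite inner_scal_l in Q. apply (Cmul_eq0 (Cadd l Ci)).
  - apply C_eq_components in Q as [Q1 Q2]. C_ring; simpl in Q1, Q2; lra.
  - intro Z. apply (f_equal Im) in Z. simpl in Z. unfold Cplus in Pl. lra.
Qed.

Lemma plus_part_image_full l k : Cplus l -> defect D T Ci k ->
  exists v, defect D T l v /\ plus_part v = k.
Proof.
  intros Pl Nk.
  destruct (projection_theorem _ k (plus_part_image_subspace l) (plus_part_image_closed l Pl))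
    as [r [[v [Nv Er]] Or]].
  exists v. split; auto. rewrite <- Er. symmetry. apply vsub_eq0.
  (* the residual k - r lies in N_i and is orthogonal to the image, hence vanishes *)
  assert (Nkr : defect D T Ci (vsub k r))
    by (apply subspace_vsub; [apply defect_subspace | auto | rewrite Er; apply plus_part_defect]).
  assert (Ok : forall w, defect D T l w -> inner (plus_part w) (vsub k r) = C0).
  { intros w Nw. rewrite inner_conj, (Or _ (ex_intro _ w (conj Nw eq_refl))). C_ring. }
  apply (defect_i_shifted_range_zero D T (Cconj l)); auto.
  - simpl. unfold Cplus in Pl. lra.
  - apply orthogonal_defect_in_shifted_range; auto. unfold Cplus in Pl. lra.
    apply orthogonal_plus_part_image_defect; auto.
Qed.

Lemma defect_i_dom_plus_defect l k : Cplus l -> defect D T Ci k -> dom_plus_defect D T l k.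
Proof.
  intros Pl Nk. destruct (plus_part_image_full l k Pl Nk) as [v [Nv Ev]].
  destruct (defect_von_neumann l v Pl Nv) as [Du [Evd _]].
  exists (vscal (Copp C1) (dom_part v)), v. split; [apply Hop; auto|]. split; auto.
  rewrite Evd at 2. rewrite Ev. vec_ring.
Qed.

End OrthogonalDefects.

Section BoundaryTriplet.
Context {H : HilbertSpace} (D : H -> Prop) (T : H -> H).
Hypotheses (Hop : is_operator D T) (Hdense : dense D).
Hypotheses (Hcl : closed_op D T) (Hsym : symmetric_op D T).
Variable V : H -> H.
Hypothesis V_in : forall x, defect D T (Copp Ci) x -> defect D T Ci (V x).
Hypothesis V_add : forall x y, defect D T (Copp Ci) x -> defect D T (Copp Ci) y ->
  V (vadd x y) = vadd (V x) (V y).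
Hypothesis V_scal : forall c x, defect D T (Copp Ci) x -> V (vscal c x) = vscal c (V x).
Hypothesis V_inner : forall x y, defect D T (Copp Ci) x -> defect D T (Copp Ci) y ->
  inner (V x) (V y) = inner x y.
Hypothesis V_onto : forall y, defect D T Ci y -> exists x, defect D T (Copp Ci) x /\ V x = y.

Notation plus_part := (plus_part D T Hop Hcl Hsym).
Notation minus_part := (minus_part D T Hop Hcl Hsym).

Definition defect_space : HilbertSpace :=
  subspace_hilbert (defect D T Ci) (defect_subspace D T Ci) (defect_closed D T Ci).

(* |1 + i|^2 = 2 absorbs the factor 2 of Green's identity *)
Definition gamma_scale : C := mkC 1 1.

Definition gamma_plus (f : H) : defect_space :=
  exist _ (vscal gamma_scale (plus_part f))
    (proj2 (proj2 (defect_subspace D T Ci)) _ _ (plus_part_defect D T Hop Hcl Hsym f)).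

Definition gamma_minus (f : H) : defect_space :=
  exist _ (vscal gamma_scale (V (minus_part f)))
    (proj2 (proj2 (defect_subspace D T Ci)) _ _ (V_in _ (minus_part_defect D T Hop Hcl Hsym f))).

Lemma gamma_minus_vzero_iff f : vzero = gamma_minus f <-> minus_part f = vzero.
Proof.
  pose proof (minus_part_defect D T Hop Hcl Hsym f) as Nm. split; intro E.
  - apply (f_equal (@proj1_sig _ _)) in E. simpl in E. symmetry in E.
    assert (E2 : V (minus_part f) = vzero).
    { rewrite <- (vscal_1 _ (V _)), <- (vscal_0_r (mkC (1/2) (-1/2))), <- E, vscal_assoc.
      f_equal. unfold gamma_scale. C_ring; field. }
    apply nsq_eq0. unfold nsq. rewrite <- V_inner, E2, inner_0_l by auto. reflexivity.
  - apply sig_eq. simpl.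
    rewrite E, <- (vscal_0_l vzero), V_scal, !vscal_0_l, vscal_0_r by apply defect_subspace.
    reflexivity.
Qed.

Lemma gamma_boundary_triplet : is_boundary_triplet D T defect_space gamma_minus gamma_plus.
Proof.
  split; [|split; [|split]].
  - intros f g Af Ag. destruct (von_neumann_add D T Hop Hdense Hcl Hsym f g Af Ag) as [_ [Ep Em]].
    split; apply sig_eq; simpl; [rewrite Em, V_add | rewrite Ep];
      rewrite ?vscal_distr_v; auto; apply minus_part_defect.
  - intros c f Af. destruct (von_neumann_scal D T Hop Hdense Hcl Hsym c f Af) as [_ [Ep Em]].
    split; apply sig_eq; simpl; [rewrite Em, V_scal | rewrite Ep];
      rewrite ?vscal_assoc; try (f_equal; C_ring); apply minus_part_defect.
  - intros f f' g g' Af Ag. simpl.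
    rewrite (adj_graph_von_neumann D T Hop Hdense Hcl Hsym f f' Af),
      (adj_graph_von_neumann D T Hop Hdense Hcl Hsym g g' Ag).
    destruct (von_neumann_decomposition D T Hop Hcl Hsym f (ex_intro _ f' Af)) as [Du Ef].
    destruct (von_neumann_decomposition D T Hop Hcl Hsym g (ex_intro _ g' Ag)) as [Du' Eg].
    pose proof (plus_part_defect D T Hop Hcl Hsym f). pose proof (minus_part_defect D T Hop Hcl Hsym f).
    pose proof (plus_part_defect D T Hop Hcl Hsym g). pose proof (minus_part_defect D T Hop Hcl Hsym g).
    set (u := dom_part D T Hop Hcl Hsym f) in *. set (a := plus_part f) in *.
    set (b := minus_part f) in *. set (u' := dom_part D T Hop Hcl Hsym g) in *.
    set (a' := plus_part g) in *. set (b' := minus_part g) in *.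
    rewrite Ef, Eg, (green_identity_parts D T), !inner_scal_l, !inner_scal_r, V_inner by auto.
    unfold gamma_scale. C_ring.
  - intros [a Na] [b Nb]. destruct (V_onto a Na) as [x [Nx Vx]].
    (* f = t b + t x with t = 1 / (1 + i) has Gamma_- f = a and Gamma_+ f = b *)
    set (t := mkC (1/2) (-1/2)).
    assert (Ets : Cmul gamma_scale t = C1) by (unfold gamma_scale, t; C_ring; field).
    assert (Nb' : defect D T Ci (vscal t b)) by (apply defect_subspace; auto).
    assert (Nx' : defect D T (Copp Ci) (vscal t x)) by (apply defect_subspace; auto).
    exists (vadd vzero (vadd (vscal t b) (vscal t x))).
    destruct (von_neumann_parts_eq D T Hop Hdense Hcl Hsym _ vzero _ _ (proj1 (proj1 Hop))
      Nb' Nx' eq_refl) as [_ [Ep Em]].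
    split; [eexists; apply (adj_graph_of_parts D T Hsym); auto; apply Hop|].
    split; apply sig_eq; simpl.
    + rewrite Em, V_scal, Vx, vscal_assoc, Ets, vscal_1; auto.
    + rewrite Ep, vscal_assoc, Ets, vscal_1; auto.
Qed.

Lemma gamma_char_fun_zero :
  (forall l, Cplus l -> forall f g, defect D T l f -> defect D T (Copp Ci) g -> inner f g = C0) ->
  is_char_fun D T defect_space gamma_minus gamma_plus (fun _ _ => vzero).
Proof.
  intros Horth l Pl. split.
  - split; [|split].
    + intros x y. symmetry. apply vadd_0.
    + intros c x. symmetry. apply vscal_0_r.
    + exists 0. intro x. rewrite hnorm_vzero. pose proof (hnorm_nonneg x). lra.
  - intro f. split.
    + intros [u [v [Du [Nv ->]]]]. split.
      * apply adj_dom_add; [exists (T u); apply adj_graph_of_dom; auto | apply (defect_adj_dom D T l); auto].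
      * apply gamma_minus_vzero_iff.
        destruct (defect_von_neumann D T Hop Hdense Hcl Hsym Horth l v Pl Nv) as [Dv [Ev _]].
        apply (von_neumann_parts_eq D T Hop Hdense Hcl Hsym (vadd u v) (vadd u (dom_part D T Hop Hcl Hsym v))
          (plus_part v) vzero); [apply Hop; auto | apply plus_part_defect | apply defect_subspace |].
        rewrite Ev at 1. vec_ring.
    + intros [Af E]. apply gamma_minus_vzero_iff in E.
      destruct (von_neumann_decomposition D T Hop Hcl Hsym f Af) as [Du Ef].
      rewrite E, vadd_0 in Ef.
      destruct (defect_i_dom_plus_defect D T Hop Hdense Hcl Hsym Horth l (plus_part f) Pl
        (plus_part_defect D T Hop Hcl Hsym f)) as [w [v [Dw [Nv Ew]]]].
      exists (vadd (dom_part D T Hop Hcl Hsym f) w), v. split; [apply Hop; auto|]. split; auto.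
      rewrite Ef at 1. rewrite Ew. vec_ring.
Qed.

End BoundaryTriplet.

Theorem mainTheorem4 (H : HilbertSpace) (D : H -> Prop) (T : H -> H)
  (Hsep : separable H)
  (Hop : is_operator D T) (Hdense : densely_defined D)
  (Hclosed : closed_op D T) (Hsym : symmetric_op D T)
  (Hdef : equal_nonzero_defect D T) :
  is_PSO D T <->
  (forall l, Cplus l -> forall f g,
     defect D T l f -> defect D T (Copp Ci) g -> inner f g = C0).
Proof.
  split.
  - intros Hpso l Pl f g.
    apply (defect_orthogonal_of_constant_sums D T Hop Hdense Hsym (is_PSO_dom_plus_defect D T Hpso)).
    exact Pl.
  - intro Horth. destruct Hdef as [Hdim _].
    destruct (unitary_of_same_dim _ _ (defect_subspace D T Ci) (defect_closed D T Ci)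
      (defect_subspace D T (Copp Ci)) (defect_closed D T (Copp Ci)) Hdim)
      as [V [V_in [V_add [V_scal [V_inner V_onto]]]]].
    exists (defect_space D T), (gamma_minus D T Hop Hclosed Hsym V V_in),
      (gamma_plus D T Hop Hclosed Hsym), (fun _ _ => vzero).
    split; [|split].
    + apply gamma_boundary_triplet; auto.
    + apply gamma_char_fun_zero; auto.
    + reflexivity.
Qed.
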